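(* Let $r\ge1$, $0<\epsilon<1/4$, $c>0$ and $\lambda=(2/3)^{1/(4r)}$. Let $D(u)$, $u\in[0,1]$, be real antisymmetric $2N\times2N$ matrices with $|D_{p,q}(u)|\le c\epsilon r^2\lambda^{|p-q|}$ for all $p,q,u$. Let $\hat U=\mathcal T\exp[i\int_0^1du\,\hat D(u)]$, where $\hat D(u)=\frac i4\sum_{p,q}D_{p,q}(u)c_pc_q$, and expand $\hat U=\sum_E\omega_EE$ over Majorana monomials, with $\omega_E=2^{-N}\mathrm{tr}(E^\dagger\hat U)$. Then for every Majorana monomial $E$ with fermionic weight $w_f$ and qubit weight $w_q$, $$|\omega_E|\le\epsilon^{w_f/4}\lambda^{w_q}e^{yN},\qquad y=\frac{3\sqrt\epsilon\,c\,r^2}{1-\sqrt\lambda}.$$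
   Context: Majorana operators $c_1,\dots,c_{2N}$ are realized on $N$ qubits by the Jordan–Wigner map: $c_{2j-1}=Z_1\cdots Z_{j-1}X_j$ and $c_{2j}=Z_1\cdots Z_{j-1}Y_j$, where $X_j,Y_j,Z_j$ are Pauli operators on qubit $j$. A Majorana monomial is $E=c_{p_1}\cdots c_{p_k}$ with $p_1<\dots<p_k$; there are $4^N$ of them and they form an operator basis. Its fermionic weight is $w_f(E)=k$. Its qubit weight $w_q(E)$ is the number of qubits on which the Pauli operator $E$ (under Jordan–Wigner) acts nontrivially. $\mathcal T\exp[i\int_0^1du\,\hat D(u)]$ denotes $\hat U(1)$, where $\partial_u\hat U(u)=i\hat D(u)\hat U(u)$ and $\hat U(0)=I$. *)

From Stdlib Require Import Reals Lra Lia Arith List Sorted ClassicalEpsilon.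
Import ListNotations.
Open Scope R_scope.

Record C := mkC { Re : R; Im : R }.
Definition C0 : C := mkC 0 0.
Definition C1 : C := mkC 1 0.
Definition Ci : C := mkC 0 1.
Definition RtoC (x : R) : C := mkC x 0.
Definition Cadd (z w : C) : C := mkC (Re z + Re w) (Im z + Im w).
Definition Copp (z : C) : C := mkC (- Re z) (- Im z).
Definition Cmul (z w : C) : C :=
  mkC (Re z * Re w - Im z * Im w) (Re z * Im w + Im z * Re w).
Definition Cconj (z : C) : C := mkC (Re z) (- Im z).
Definition Cnorm (z : C) : R := sqrt (Re z * Re z + Im z * Im z).

Fixpoint csum (f : nat -> C) (n : nat) : C :=
  match n with O => C0 | S m => Cadd (csum f m) (f m) end.
Fixpoint cprod (f : nat -> C) (n : nat) : C :=
  match n with O => C1 | S m => Cmul (cprod f m) (f m) end.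

(* ---------- matrices (indices 0 .. d-1; entries outside are irrelevant) ---------- *)
Definition Mx := nat -> nat -> C.
Definition mx_id : Mx := fun i j => if Nat.eqb i j then C1 else C0.
Definition mx_mul (d : nat) (A B : Mx) : Mx :=
  fun i j => csum (fun k => Cmul (A i k) (B k j)) d.
Definition mx_scale (z : C) (A : Mx) : Mx := fun i j => Cmul z (A i j).
Definition mx_sum (f : nat -> Mx) (n : nat) : Mx := fun i j => csum (fun k => f k i j) n.
Definition mx_adj (A : Mx) : Mx := fun i j => Cconj (A j i).
Definition mx_trace (d : nat) (A : Mx) : C := csum (fun a => A a a) d.

(* labels: 0 = I, 1 = X, 2 = Y, 3 = Z; basis |0>,|1> of one qubit *)
Definition pauli1 (l : nat) (x y : bool) : C :=
  match l with
  | 1%nat => if Bool.eqb x y then C0 else C1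
  | 2%nat => match x, y with
             | false, true => Copp Ci
             | true, false => Ci
             | _, _ => C0 end
  | 3%nat => if Bool.eqb x y then (if x then Copp C1 else C1) else C0
  | _ => if Bool.eqb x y then C1 else C0
  end.

(* qubit k (0-based) is bit k of the basis-state index *)
Definition pauli_string (N : nat) (s : nat -> nat) : Mx :=
  fun a b => cprod (fun k => pauli1 (s k) (Nat.testbit a k) (Nat.testbit b k)) N.

(* Jordan-Wigner Majorana c_p, p = 1 .. 2N:
   c_{2j-1} = Z_1..Z_{j-1} X_j , c_{2j} = Z_1..Z_{j-1} Y_j  (qubit j is 0-based j-1) *)
Definition majorana (N p : nat) : Mx :=
  pauli_string N (fun k =>
    let j0 := ((p - 1) / 2)%nat in
    if Nat.ltb k j0 then 3%nat
    else if Nat.eqb k j0 then (if Nat.odd p then 1%nat else 2%nat)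
    else 0%nat).

Definition monomial (N : nat) (ps : list nat) : Mx :=
  fold_right (fun p M => mx_mul (2 ^ N) (majorana N p) M) mx_id ps.

Definition monomial_index (N : nat) (ps : list nat) : Prop :=
  Sorted lt ps /\ Forall (fun p => (1 <= p <= 2 * N)%nat) ps.

Definition fermionic_weight (ps : list nat) : nat := length ps.

(* M acts trivially on qubit k, i.e. M = I_k (x) M' *)
Definition acts_trivially_on (N k : nat) (M : Mx) : Prop :=
  forall a b, (a < 2 ^ N)%nat -> (b < 2 ^ N)%nat ->
    (Nat.testbit a k <> Nat.testbit b k -> M a b = C0) /\
    M a b = M (Nat.lxor a (2 ^ k)) (Nat.lxor b (2 ^ k)).

Definition bool_of (P : Prop) : bool :=
  if excluded_middle_informative P then true else false.

Definition qubit_weight (N : nat) (M : Mx) : nat :=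
  length (filter (fun k => negb (bool_of (acts_trivially_on N k M))) (seq 0 N)).

Definition Dhat (N : nat) (D : R -> nat -> nat -> R) (u : R) : Mx :=
  mx_scale (Cmul Ci (RtoC (/ 4)))
    (mx_sum (fun p => mx_sum (fun q =>
        mx_scale (RtoC (D u (S p) (S q)))
          (mx_mul (2 ^ N) (majorana N (S p)) (majorana N (S q)))) (2 * N)) (2 * N)).

(* U solves dU/du = i Dhat(u) U(u) on (0,1), U(0) = I, U continuous on [0,1];
   then U 1 = T exp[i int_0^1 Dhat]. *)
Definition is_Texp (N : nat) (D : R -> nat -> nat -> R) (U : R -> Mx) : Prop :=
  let d := (2 ^ N)%nat in
  (forall i j, (i < d)%nat -> (j < d)%nat -> U 0 i j = mx_id i j) /\
  (forall u, 0 < u < 1 -> forall i j, (i < d)%nat -> (j < d)%nat ->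
     derivable_pt_lim (fun t => Re (U t i j)) u
       (Re (mx_mul d (mx_scale Ci (Dhat N D u)) (U u) i j)) /\
     derivable_pt_lim (fun t => Im (U t i j)) u
       (Im (mx_mul d (mx_scale Ci (Dhat N D u)) (U u) i j))) /\
  (forall i j, (i < d)%nat -> (j < d)%nat ->
     forall t0, (t0 = 0 \/ t0 = 1) ->
     limit1_in (fun t => Re (U t i j)) (fun t => 0 <= t <= 1) (Re (U t0 i j)) t0 /\
     limit1_in (fun t => Im (U t i j)) (fun t => 0 <= t <= 1) (Im (U t0 i j)) t0).

Definition omega (N : nat) (E U : Mx) : C :=
  Cmul (RtoC (/ 2 ^ N)) (mx_trace (2 ^ N) (mx_mul (2 ^ N) (mx_adj E) U)).

Definition natdist (p q : nat) : nat := ((p - q) + (q - p))%nat.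

Definition lam (r : R) : R := Rpower (2 / 3) (/ (4 * r)).
Definition yexp (eps c r : R) : R := 3 * sqrt eps * c * r ^ 2 / (1 - sqrt (lam r)).

From Pilot Require Import Defs.
From Stdlib Require Import Reals List Lra Lia Sorted Permutation Ring Classical ClassicalEpsilon.
Import ListNotations.
(* Re-import [Defs] so that its complex numbers [C] shadow the binomial [C] of [Reals]. *)
Import Defs.
Open Scope R_scope.

(* Write [U(1) = sum_E omega_E E] over the Majorana monomials [E], indexed by
   bit masks [m] of [1..2N].  Give the monomial [m] the weight
   [W_m = eps^(fw m / 4) * lam^(sw m)], where [fw] is the fermionic weight and
   [sw] is an upper bound for the qubit weight: the number of qubits [k] at which
   the monomial fails to commute with [X_k] or [Z_k].  The proof shows that the
   Lyapunov function [G(t) = sum_m |omega_m(t)|^2 / W_m^2] satisfies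
   [G' <= 2 K G] with [K <= y N], hence [G(1) <= exp(2 y N)] by Gronwall, since
   [G(0) = 1].  Each [|omega_m(1)|] is then at most [W_m exp(y N)].

   The bound [G' <= 2 K G] is a weighted Schur test: the generator [i Dhat]
   is a sum of Majorana pairs [c_p c_q]; such a pair maps a monomial to
   [+-] the monomial with bits [p] and [q] flipped, which changes [fw] by at most
   2 and [sw] by at most the number of qubits between the sites of [p] and [q]
   (outside that range the pair commutes with [X_k] and [Z_k]).  The decay of
   [D] in [|p-q|] pays for this, and a geometric sum gives [K]. *)

Lemma C_ext : forall z w : C, Re z = Re w -> Im z = Im w -> z = w.
Proof. intros [a b] [c d]; simpl; intros; subst; reflexivity. Qed.

Definition Csub z w := Cadd z (Copp w).

Lemma Cring_th : ring_theory C0 C1 Cadd Cmul Csub Copp (@eq C).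
Proof.
  constructor; intros; apply C_ext; unfold Csub, Cadd, Cmul, Copp, C0, C1; simpl; ring.
Qed.

Add Ring Cring : Cring_th.

Ltac Ceq := apply C_ext; unfold Csub, Cadd, Cmul, Copp, C0, C1, Ci, RtoC, Cconj; simpl; try ring.

Lemma RtoC_mul a b : RtoC (a*b) = Cmul (RtoC a) (RtoC b).
Proof. Ceq. Qed.

Lemma Cconj_mul z w : Cconj (Cmul z w) = Cmul (Cconj z) (Cconj w).
Proof. Ceq. Qed.

Lemma Cconj_add z w : Cconj (Cadd z w) = Cadd (Cconj z) (Cconj w).
Proof. Ceq. Qed.

Lemma csum_ext f g n : (forall k, (k < n)%nat -> f k = g k) -> csum f n = csum g n.
Proof. induction n; simpl; intros; auto. rewrite IHn by auto. rewrite H by lia. auto. Qed.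

Lemma csum_add f g n : csum (fun k => Cadd (f k) (g k)) n = Cadd (csum f n) (csum g n).
Proof. induction n; simpl. Ceq. rewrite IHn; ring. Qed.

Lemma csum_mul_l c f n : csum (fun k => Cmul c (f k)) n = Cmul c (csum f n).
Proof. induction n; simpl. Ceq. rewrite IHn; ring. Qed.

Lemma csum_mul_r c f n : csum (fun k => Cmul (f k) c) n = Cmul (csum f n) c.
Proof. induction n; simpl. Ceq. rewrite IHn; ring. Qed.

Lemma csum_zero n : csum (fun _ => C0) n = C0.
Proof. induction n; simpl; auto. rewrite IHn; ring. Qed.

Lemma csum_swap f n m : csum (fun k => csum (fun l => f k l) m) n = csum (fun l => csum (fun k => f k l) n) m.
Proof.
  induction n; simpl. rewrite csum_zero; auto.
  rewrite IHn. rewrite <- csum_add. auto.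
Qed.

Lemma csum_split f n m : csum f (n + m) = Cadd (csum f n) (csum (fun k => f (n + k)%nat) m).
Proof. induction m; simpl. rewrite Nat.add_0_r; ring. rewrite Nat.add_succ_r; simpl. rewrite IHm; ring. Qed.

Lemma csum_single f n k0 : (k0 < n)%nat -> (forall k, (k < n)%nat -> k <> k0 -> f k = C0) -> csum f n = f k0.
Proof.
  induction n; intros; [lia|]. simpl.
  destruct (Nat.eq_dec k0 n).
  - subst. rewrite (csum_ext f (fun _ => C0)). rewrite csum_zero; ring.
    intros; apply H0; lia.
  - rewrite IHn by (try lia; intros; apply H0; lia). rewrite (H0 n) by lia. ring.
Qed.

Lemma csum_opp f n : csum (fun k => Copp (f k)) n = Copp (csum f n).
Proof. induction n; simpl. Ceq; lra. rewrite IHn; ring. Qed.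

Lemma csum_conj f n : csum (fun k => Cconj (f k)) n = Cconj (csum f n).
Proof. induction n; simpl. Ceq; lra. rewrite IHn, Cconj_add; auto. Qed.

Lemma cprod_ext f g n : (forall k, (k < n)%nat -> f k = g k) -> cprod f n = cprod g n.
Proof. induction n; simpl; intros; auto. rewrite IHn by auto. rewrite H by lia. auto. Qed.

Lemma cprod_mul f g n : cprod (fun k => Cmul (f k) (g k)) n = Cmul (cprod f n) (cprod g n).
Proof. induction n; simpl. ring. rewrite IHn; ring. Qed.

Lemma cprod_one n : cprod (fun _ => C1) n = C1.
Proof. induction n; simpl; auto. rewrite IHn; ring. Qed.

Lemma cprod_zero f n k0 : (k0 < n)%nat -> f k0 = C0 -> cprod f n = C0.
Proof.
  induction n; intros; [lia|]. simpl.
  destruct (Nat.eq_dec k0 n). subst. rewrite H0; ring.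
  rewrite IHn by (auto; lia). ring.
Qed.

Lemma cprod_single f n k0 : (k0 < n)%nat -> (forall k, (k < n)%nat -> k <> k0 -> f k = C1) -> cprod f n = f k0.
Proof.
  induction n; intros; [lia|]. simpl.
  destruct (Nat.eq_dec k0 n).
  - subst. rewrite (cprod_ext f (fun _ => C1)). rewrite cprod_one; ring.
    intros; apply H0; lia.
  - rewrite IHn by (try lia; intros; apply H0; lia). rewrite (H0 n) by lia. ring.
Qed.

Lemma cprod_conj f n : cprod (fun k => Cconj (f k)) n = Cconj (cprod f n).
Proof. induction n; simpl. Ceq; lra. rewrite IHn, Cconj_mul; auto. Qed.

Fixpoint rsum (f : nat -> R) (n : nat) : R :=
  match n with O => 0 | S m => rsum f m + f m end.

Lemma rsum_ext f g n : (forall k, (k < n)%nat -> f k = g k) -> rsum f n = rsum g n.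
Proof. induction n; simpl; intros; auto. rewrite IHn by auto. rewrite H by lia. auto. Qed.

Lemma rsum_add f g n : rsum (fun k => f k + g k) n = rsum f n + rsum g n.
Proof. induction n; simpl. lra. rewrite IHn; lra. Qed.

Lemma rsum_scal c f n : rsum (fun k => c * f k) n = c * rsum f n.
Proof. induction n; simpl. lra. rewrite IHn; lra. Qed.

Lemma rsum_le f g n : (forall k, (k < n)%nat -> f k <= g k) -> rsum f n <= rsum g n.
Proof. induction n; simpl; intros. lra. apply Rplus_le_compat. apply IHn; auto. apply H; lia. Qed.

Lemma rsum_nonneg f n : (forall k, (k < n)%nat -> 0 <= f k) -> 0 <= rsum f n.
Proof. induction n; simpl; intros. lra. assert (0 <= f n) by (apply H; lia). assert (0 <= rsum f n) by auto. lra. Qed.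

Lemma rsum_zero n : rsum (fun _ => 0) n = 0.
Proof. induction n; simpl; auto. rewrite IHn; lra. Qed.

Lemma rsum_swap f n m : rsum (fun k => rsum (fun l => f k l) m) n = rsum (fun l => rsum (fun k => f k l) n) m.
Proof.
  induction n; simpl. rewrite rsum_zero; auto.
  rewrite IHn. rewrite <- rsum_add. auto.
Qed.

Lemma rsum_single f n k0 : (k0 < n)%nat -> (forall k, (k < n)%nat -> k <> k0 -> f k = 0) -> rsum f n = f k0.
Proof.
  induction n; intros; [lia|]. simpl.
  destruct (Nat.eq_dec k0 n).
  - subst. rewrite (rsum_ext f (fun _ => 0)). rewrite rsum_zero; ring.
    intros; apply H0; lia.
  - rewrite IHn by (try lia; intros; apply H0; lia). rewrite (H0 n) by lia. ring.
Qed.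

Lemma rsum_ge_term f n k0 : (k0 < n)%nat -> (forall k, (k < n)%nat -> 0 <= f k) -> f k0 <= rsum f n.
Proof.
  induction n; intros; [lia|]. simpl.
  destruct (Nat.eq_dec k0 n).
  - subst. assert (0 <= rsum f n) by (apply rsum_nonneg; intros; apply H0; lia). lra.
  - assert (f k0 <= rsum f n) by (apply IHn; try lia; intros; apply H0; lia).
    assert (0 <= f n) by (apply H0; lia). lra.
Qed.

Lemma rsum_shift f n : rsum f (S n) = f 0%nat + rsum (fun k => f (S k)) n.
Proof. induction n; simpl in *. lra. rewrite IHn. lra. Qed.

Lemma rsum_const (k : R) n : rsum (fun _ => k) n = k * INR n.
Proof. induction n; [simpl; ring |]. simpl rsum. rewrite IHn, S_INR. ring. Qed.

Definition lsum (l : list R) := fold_right Rplus 0 l.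

Lemma lsum_perm l l' : Permutation l l' -> lsum l = lsum l'.
Proof. induction 1; simpl; auto; try lra. Qed.

Lemma lsum_app l l' : lsum (l ++ l') = lsum l + lsum l'.
Proof. induction l; simpl. lra. rewrite IHl; lra. Qed.

Lemma rsum_lsum f n : rsum f n = lsum (map f (seq 0 n)).
Proof.
  induction n. reflexivity. change (rsum f (S n)) with (rsum f n + f n). rewrite seq_S, map_app, lsum_app, IHn. simpl. lra.
Qed.

Lemma rsum_reindex f n (s : nat -> nat) :
  (forall k, (k < n)%nat -> (s k < n)%nat /\ s (s k) = k) ->
  rsum (fun k => f (s k)) n = rsum f n.
Proof.
  intros H. rewrite !rsum_lsum. rewrite <- (map_map s f).
  apply lsum_perm. apply Permutation_map.
  apply NoDup_Permutation.
  - apply FinFun.Injective_map_NoDup_in. 2: apply seq_NoDup.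
    intros x y Hx Hy E. apply in_seq in Hx, Hy.
    rewrite <- (proj2 (H x ltac:(lia))), <- (proj2 (H y ltac:(lia))), E; auto.
  - apply seq_NoDup.
  - intros x. rewrite in_map_iff. split.
    + intros [y [E Hy]]. apply in_seq in Hy. subst. apply in_seq. pose proof (H y ltac:(lia)). lia.
    + intros Hx. apply in_seq in Hx. exists (s x). split. apply H; lia. apply in_seq. pose proof (H x ltac:(lia)). lia.
Qed.

Lemma rsum2_lin (al be : R) (F H : nat -> nat -> R) n1 n2 :
  rsum (fun p => rsum (fun q => al * F p q + be * H p q) n2) n1 =
  al * rsum (fun p => rsum (fun q => F p q) n2) n1 + be * rsum (fun p => rsum (fun q => H p q) n2) n1.
Proof.
  rewrite <- !rsum_scal, <- rsum_add. apply rsum_ext; intros.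
  rewrite <- !rsum_scal, <- rsum_add. auto.
Qed.

Lemma Re_csum f n : Re (csum f n) = rsum (fun k => Re (f k)) n.
Proof. induction n; simpl; auto. rewrite IHn; auto. Qed.

Lemma Im_csum f n : Im (csum f n) = rsum (fun k => Im (f k)) n.
Proof. induction n; simpl; auto. rewrite IHn; auto. Qed.

Lemma geo_sum mu n : 0 <= mu < 1 -> rsum (fun q => mu ^ q) n <= 1 / (1 - mu).
Proof.
  intros Hm. assert (forall n, rsum (fun q => mu ^ q) n = (1 - mu ^ n) / (1 - mu)).
  { induction n0; simpl. field; lra. rewrite IHn0. field; lra. }
  rewrite H. apply Rmult_le_compat_r. left; apply Rinv_0_lt_compat; lra.
  pose proof (pow_le mu n ltac:(lra)). lra.
Qed.

Lemma pow_le1 mu k : 0 <= mu <= 1 -> mu ^ k <= 1.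
Proof. intros; induction k; simpl. lra. pose proof (pow_le mu k ltac:(lra)). nra. Qed.

Lemma pow_le_exp mu a b : 0 <= mu <= 1 -> (b <= a)%nat -> mu ^ a <= mu ^ b.
Proof.
  intros Hm Hab. replace a with (b + (a - b))%nat by lia. rewrite pow_add.
  pose proof (pow_le1 mu (a - b) Hm). pose proof (pow_le mu b ltac:(lra)). nra.
Qed.

Lemma dist_sum mu : 0 <= mu < 1 -> forall p n,
  rsum (fun q => mu ^ natdist p q) n <= (1 + mu - mu ^ (S p)) / (1 - mu).
Proof.
  intros Hm p. induction p; intros n.
  - rewrite (rsum_ext _ (fun q => mu ^ q)). eapply Rle_trans. apply geo_sum; auto.
    apply Req_le. simpl. field; lra. intros; unfold natdist; f_equal; lia.
  - destruct n.
    + simpl. apply Rmult_le_pos. pose proof (pow_le1 mu (S (S p)) ltac:(lra)). simpl in H. lra.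
      left; apply Rinv_0_lt_compat; lra.
    + rewrite rsum_shift. rewrite (rsum_ext _ (fun q => mu ^ natdist p q)).
      2:{ intros; unfold natdist; f_equal; lia. }
      replace (natdist (S p) 0) with (S p) by (unfold natdist; lia).
      specialize (IHp n).
      apply Rle_trans with (mu ^ S p + (1 + mu - mu ^ S p) / (1 - mu)). lra.
      apply Req_le. simpl. field. lra.
Qed.

Lemma bit_high a N n : (a < 2 ^ N)%nat -> (N <= n)%nat -> Nat.testbit a n = false.
Proof.
  intros. rewrite <- (Nat.mod_small a (2^N)) by auto. apply Nat.mod_pow2_bits_high; auto.
Qed.

Lemma bits_lt a N : (forall n, (N <= n)%nat -> Nat.testbit a n = false) -> (a < 2 ^ N)%nat.
Proof.
  intros. assert (a = a mod 2 ^ N).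
  { apply Nat.bits_inj; intro n. destruct (Nat.lt_ge_cases n N).
    rewrite Nat.mod_pow2_bits_low; auto. rewrite Nat.mod_pow2_bits_high; auto. }
  rewrite H0. apply Nat.mod_upper_bound. apply Nat.pow_nonzero; lia.
Qed.

Lemma bits_eq a b N : (a < 2^N)%nat -> (b < 2^N)%nat ->
  (forall n, (n < N)%nat -> Nat.testbit a n = Nat.testbit b n) -> a = b.
Proof.
  intros. apply Nat.bits_inj; intro n. destruct (Nat.lt_ge_cases n N); auto.
  rewrite (bit_high a N), (bit_high b N); auto.
Qed.

Lemma xor_lt a b N : (a < 2^N)%nat -> (b < 2^N)%nat -> (Nat.lxor a b < 2^N)%nat.
Proof.
  intros. apply bits_lt; intros. rewrite Nat.lxor_spec, (bit_high a N), (bit_high b N); auto.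
Qed.

Lemma pow2_lt k N : (k < N)%nat -> (2^k < 2^N)%nat.
Proof. intros; apply Nat.pow_lt_mono_r; lia. Qed.

Lemma xor_invol a b : Nat.lxor (Nat.lxor a b) b = a.
Proof. rewrite Nat.lxor_assoc, Nat.lxor_nilpotent, Nat.lxor_0_r; auto. Qed.

Lemma bit_add_pow a N n : (a < 2^N)%nat -> (n < N)%nat -> Nat.testbit (2^N + a) n = Nat.testbit a n.
Proof.
  intros. rewrite <- (Nat.mod_pow2_bits_low _ N) by auto.
  f_equal. rewrite Nat.add_comm. rewrite <- (Nat.mul_1_l (2^N)) at 1.
  rewrite Nat.Div0.mod_add. apply Nat.mod_small; auto.
Qed.

Lemma bit_add_pow_top a N : (a < 2^N)%nat -> Nat.testbit (2^N + a) N = true.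
Proof.
  intros. apply (Nat.testbit_unique _ _ true a 0); auto. simpl. lia.
Qed.

Lemma diff_bit a b N : (a < 2^N)%nat -> (b < 2^N)%nat -> a <> b ->
  exists k, (k < N)%nat /\ Nat.testbit a k <> Nat.testbit b k.
Proof.
  intros. destruct (Classical_Prop.classic (exists k, (k < N)%nat /\ Nat.testbit a k <> Nat.testbit b k)); auto.
  exfalso; apply H1; apply (bits_eq a b N); auto. intros.
  destruct (Bool.bool_dec (Nat.testbit a n) (Nat.testbit b n)); auto. exfalso; apply H2; eauto.
Qed.

Lemma mask_exists n (P : nat -> bool) : exists m, (m < 2^n)%nat /\ forall i, (i < n)%nat -> Nat.testbit m i = P i.
Proof.
  induction n.
  - exists 0%nat; split. simpl; lia. intros; lia.
  - destruct IHn as [m [Hm Hb]]. destruct (P n) eqn:Pn.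
    + exists (2^n + m)%nat. split. simpl; lia. intros i Hi.
      destruct (Nat.eq_dec i n). subst. rewrite bit_add_pow_top; auto.
      rewrite bit_add_pow by (auto; lia). apply Hb; lia.
    + exists m. split. simpl; lia. intros i Hi.
      destruct (Nat.eq_dec i n). subst. rewrite (bit_high m n n); auto.
      apply Hb; lia.
Qed.

Definition mx_eq (d : nat) (A B : Mx) : Prop := forall i j, (i < d)%nat -> (j < d)%nat -> A i j = B i j.

Lemma mx_mul_assoc d A B C i j : mx_mul d (mx_mul d A B) C i j = mx_mul d A (mx_mul d B C) i j.
Proof.
  unfold mx_mul. rewrite (csum_ext _ (fun k => csum (fun l => Cmul (A i l) (Cmul (B l k) (C k j))) d)).
  rewrite csum_swap. apply csum_ext; intros. rewrite <- csum_mul_l. auto.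
  intros. rewrite <- csum_mul_r. apply csum_ext; intros; ring.
Qed.

Lemma mx_mul_meq_r d A B B' i j : mx_eq d B B' -> (j < d)%nat -> mx_mul d A B i j = mx_mul d A B' i j.
Proof. intros. unfold mx_mul. apply csum_ext; intros. rewrite H; auto. Qed.

Lemma mx_mul_meq_l d A A' B i j : mx_eq d A A' -> (i < d)%nat -> mx_mul d A B i j = mx_mul d A' B i j.
Proof. intros. unfold mx_mul. apply csum_ext; intros. rewrite H; auto. Qed.

Lemma mx_mul_scale_l d s A B i j : mx_mul d (mx_scale s A) B i j = Cmul s (mx_mul d A B i j).
Proof. unfold mx_mul, mx_scale. rewrite <- csum_mul_l. apply csum_ext; intros; ring. Qed.

Lemma mx_mul_scale_r d s A B i j : mx_mul d A (mx_scale s B) i j = Cmul s (mx_mul d A B i j).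
Proof. unfold mx_mul, mx_scale. rewrite <- csum_mul_l. apply csum_ext; intros; ring. Qed.

Lemma mx_mul_id_l d A i j : (i < d)%nat -> mx_mul d mx_id A i j = A i j.
Proof.
  intros. unfold mx_mul. rewrite (csum_single _ _ i); auto.
  unfold mx_id; rewrite Nat.eqb_refl; ring.
  intros. unfold mx_id. destruct (Nat.eqb_spec i k); try lia. ring.
Qed.

Lemma mx_mul_id_r d A i j : (j < d)%nat -> mx_mul d A mx_id i j = A i j.
Proof.
  intros. unfold mx_mul. rewrite (csum_single _ _ j); auto.
  unfold mx_id; rewrite Nat.eqb_refl; ring.
  intros. unfold mx_id. destruct (Nat.eqb_spec k j); try lia. ring.
Qed.

Lemma mx_mul_ext_l d A A' B i j : (forall k, A i k = A' i k) -> mx_mul d A B i j = mx_mul d A' B i j.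
Proof. intros H; unfold mx_mul; apply csum_ext; intros; rewrite H; auto. Qed.

Lemma mx_mul_ext_r d A B B' i j : (forall k, B k j = B' k j) -> mx_mul d A B i j = mx_mul d A B' i j.
Proof. intros H; unfold mx_mul; apply csum_ext; intros; rewrite H; auto. Qed.

Lemma mx_mul_sum_l d (f : nat -> Mx) n B i j :
  mx_mul d (mx_sum f n) B i j = csum (fun p => mx_mul d (f p) B i j) n.
Proof.
  unfold mx_mul, mx_sum. rewrite (csum_ext _ (fun k => csum (fun p => Cmul (f p i k) (B k j)) n)).
  apply csum_swap. intros; rewrite <- csum_mul_r; auto.
Qed.

Lemma mx_adj_mul d A B i j : mx_adj (mx_mul d A B) i j = mx_mul d (mx_adj B) (mx_adj A) i j.
Proof.
  unfold mx_adj, mx_mul. rewrite <- csum_conj. apply csum_ext; intros. rewrite Cconj_mul. ring.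
Qed.

Lemma mx_trace_comm d A B : mx_trace d (mx_mul d A B) = mx_trace d (mx_mul d B A).
Proof.
  unfold mx_trace, mx_mul. rewrite csum_swap. apply csum_ext; intros. apply csum_ext; intros; ring.
Qed.

Lemma mx_trace_meq d A B : mx_eq d A B -> mx_trace d A = mx_trace d B.
Proof. intros. unfold mx_trace. apply csum_ext; intros; auto. Qed.

Definition tensor_mx (N : nat) (F : nat -> bool -> bool -> C) : Mx :=
  fun a b => cprod (fun k => F k (Nat.testbit a k) (Nat.testbit b k)) N.

Definition qubit_mul (F G : bool -> bool -> C) : bool -> bool -> C :=
  fun x y => Cadd (Cmul (F x false) (G false y)) (Cmul (F x true) (G true y)).

Lemma tensor_mx_mul N F G a b :
  mx_mul (2^N) (tensor_mx N F) (tensor_mx N G) a b = tensor_mx N (fun k => qubit_mul (F k) (G k)) a b.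
Proof.
  revert a b. induction N; intros a b.
  - unfold mx_mul, tensor_mx; simpl. ring.
  - unfold mx_mul. replace (2 ^ S N)%nat with (2^N + 2^N)%nat by (simpl; lia).
    rewrite csum_split.
    assert (E1: csum (fun k : nat => Cmul (tensor_mx (S N) F a k) (tensor_mx (S N) G k b)) (2 ^ N)
      = csum (fun k => Cmul (Cmul (tensor_mx N F a k) (tensor_mx N G k b))
       (Cmul (F N (Nat.testbit a N) false) (G N false (Nat.testbit b N)))) (2^N)).
    { apply csum_ext. intros. unfold tensor_mx; simpl. rewrite (bit_high k N N) by lia. ring. }
    assert (E2: csum (fun k : nat => Cmul (tensor_mx (S N) F a (2 ^ N + k)%nat)
          (tensor_mx (S N) G (2 ^ N + k)%nat b)) (2 ^ N)
      = csum (fun k => Cmul (Cmul (tensor_mx N F a k) (tensor_mx N G k b))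
       (Cmul (F N (Nat.testbit a N) true) (G N true (Nat.testbit b N)))) (2^N)).
    { apply csum_ext. intros. unfold tensor_mx; simpl. rewrite bit_add_pow_top by auto.
        rewrite (cprod_ext (fun k0 => F k0 (Nat.testbit a k0) (Nat.testbit (2 ^ N + k) k0))
                   (fun k0 => F k0 (Nat.testbit a k0) (Nat.testbit k k0))).
        rewrite (cprod_ext (fun k0 => G k0 (Nat.testbit (2 ^ N + k) k0) (Nat.testbit b k0))
                   (fun k0 => G k0 (Nat.testbit k k0) (Nat.testbit b k0))). ring.
        intros; rewrite bit_add_pow; auto. intros; rewrite bit_add_pow; auto. }
    rewrite E1, E2.
    rewrite !csum_mul_r. pose proof (IHN a b) as E. unfold mx_mul in E. rewrite E.
    unfold tensor_mx, qubit_mul; simpl. ring.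
Qed.

Lemma pauli_string_tensor N s : pauli_string N s = tensor_mx N (fun k => pauli1 (s k)).
Proof. reflexivity. Qed.

Definition qubit_id (x y : bool) : C := if Bool.eqb x y then C1 else C0.

Lemma tensor_mx_id N a b : (a < 2^N)%nat -> (b < 2^N)%nat ->
  tensor_mx N (fun _ => qubit_id) a b = mx_id a b.
Proof.
  intros. unfold tensor_mx, mx_id. destruct (Nat.eqb_spec a b).
  - subst. rewrite (cprod_ext _ (fun _ => C1)). apply cprod_one.
    intros; unfold qubit_id; rewrite Bool.eqb_reflx; auto.
  - destruct (diff_bit a b N H H0 n) as [k [Hk Hb]].
    apply (cprod_zero _ _ k); auto. unfold qubit_id.
    destruct (Nat.testbit a k), (Nat.testbit b k); simpl; congruence.
Qed.

Definition pauli_label (l : nat) : nat := match l with 1%nat => 1%nat | 2%nat => 2%nat | 3%nat => 3%nat | _ => 0%nat end.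

Definition pauli_comm_sign (l m : nat) : R :=
  if orb (pauli_label l =? 0)%nat (orb (pauli_label m =? 0)%nat (pauli_label l =? pauli_label m)%nat) then 1 else -1.

Lemma qubit_pauli_comm l m x y : qubit_mul (pauli1 l) (pauli1 m) x y =
  Cmul (RtoC (pauli_comm_sign l m)) (qubit_mul (pauli1 m) (pauli1 l) x y).
Proof.
  destruct l as [|[|[|[|l]]]], m as [|[|[|[|m]]]], x, y;
  unfold qubit_mul, pauli_comm_sign, pauli_label; simpl; Ceq.
Qed.

Lemma qubit_pauli_sq l x y : qubit_mul (pauli1 l) (pauli1 l) x y = qubit_id x y.
Proof. destruct l as [|[|[|[|l]]]], x, y; unfold qubit_mul, qubit_id; simpl; Ceq. Qed.

Lemma qubit_pauli_herm l x y : Cconj (pauli1 l y x) = pauli1 l x y.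
Proof. destruct l as [|[|[|[|l]]]], x, y; simpl; Ceq. Qed.

Lemma pauli_comm N s t a b :
  mx_mul (2^N) (pauli_string N s) (pauli_string N t) a b =
  Cmul (cprod (fun k => RtoC (pauli_comm_sign (s k) (t k))) N)
       (mx_mul (2^N) (pauli_string N t) (pauli_string N s) a b).
Proof.
  rewrite !pauli_string_tensor, !tensor_mx_mul. unfold tensor_mx. rewrite <- cprod_mul.
  apply cprod_ext; intros. apply qubit_pauli_comm.
Qed.

Lemma pauli_sq N s a b : (a < 2^N)%nat -> (b < 2^N)%nat ->
  mx_mul (2^N) (pauli_string N s) (pauli_string N s) a b = mx_id a b.
Proof.
  intros. rewrite pauli_string_tensor, tensor_mx_mul. rewrite <- (tensor_mx_id N) by auto.
  unfold tensor_mx. apply cprod_ext; intros. apply qubit_pauli_sq.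
Qed.

Lemma pauli_herm N s a b : mx_adj (pauli_string N s) a b = pauli_string N s a b.
Proof.
  unfold mx_adj, pauli_string. rewrite <- cprod_conj. apply cprod_ext; intros. apply qubit_pauli_herm.
Qed.

Definition maj_qubit (p : nat) : nat := ((p - 1) / 2)%nat.

Definition maj_label (p k : nat) : nat :=
  if Nat.ltb k (maj_qubit p) then 3%nat
  else if Nat.eqb k (maj_qubit p) then (if Nat.odd p then 1%nat else 2%nat) else 0%nat.

Lemma majorana_eq N p : majorana N p = pauli_string N (maj_label p).
Proof. reflexivity. Qed.

Lemma maj_parity_cases p : (1 <= p)%nat ->
  (Nat.odd p = true /\ p = (2 * maj_qubit p + 1)%nat) \/ (Nat.odd p = false /\ p = (2 * maj_qubit p + 2)%nat).
Proof.
  intros. unfold maj_qubit. destruct (Nat.Even_or_Odd p) as [[m Hm]|[m Hm]]; subst.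
  - right. assert (m >= 1)%nat by lia.
    replace (2*m-1)%nat with (2*(m-1)+1)%nat by lia.
    rewrite <- (Nat.div_unique (2*(m-1)+1) 2 (m-1) 1) by lia. split; [|lia].
    apply Nat.odd_even.
  - left. replace (2*m+1-1)%nat with (2*m+0)%nat by lia.
    rewrite <- (Nat.div_unique (2*m+0) 2 m 0) by lia. split; [|lia].
    apply Nat.odd_odd.
Qed.

Lemma maj_qubit_lt N p : (1 <= p <= 2 * N)%nat -> (maj_qubit p < N)%nat.
Proof. intros. destruct (maj_parity_cases p) as [[_ E]|[_ E]]; lia. Qed.

Lemma maj_comm_sign p q k : (1 <= p)%nat -> (1 <= q)%nat -> p <> q ->
  pauli_comm_sign (maj_label p k) (maj_label q k) = if (k =? Nat.min (maj_qubit p) (maj_qubit q))%nat then -1 else 1.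
Proof.
  intros.
  destruct (maj_parity_cases p) as [[Hp Ep]|[Hp Ep]]; auto;
  destruct (maj_parity_cases q) as [[Hq Eq]|[Hq Eq]]; auto;
  unfold maj_label; rewrite ?Hp, ?Hq;
  destruct (Nat.ltb_spec k (maj_qubit p)); destruct (Nat.eqb_spec k (maj_qubit p));
  destruct (Nat.ltb_spec k (maj_qubit q)); destruct (Nat.eqb_spec k (maj_qubit q));
  destruct (Nat.eqb_spec k (Nat.min (maj_qubit p) (maj_qubit q))); try lia;
  unfold pauli_comm_sign; simpl; auto.
Qed.

Lemma maj_anticomm N p q a b : (1 <= p <= 2 * N)%nat -> (1 <= q <= 2 * N)%nat -> p <> q ->
  mx_mul (2^N) (majorana N p) (majorana N q) a b = Copp (mx_mul (2^N) (majorana N q) (majorana N p) a b).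
Proof.
  intros. rewrite !majorana_eq, pauli_comm.
  rewrite (cprod_single _ _ (Nat.min (maj_qubit p) (maj_qubit q))).
  - rewrite maj_comm_sign, Nat.eqb_refl by lia. Ceq.
  - pose proof (maj_qubit_lt N p H); lia.
  - intros. rewrite maj_comm_sign by lia. destruct (Nat.eqb_spec k (Nat.min (maj_qubit p) (maj_qubit q))); try lia. Ceq.
Qed.

Lemma maj_sq N p a b : (a < 2^N)%nat -> (b < 2^N)%nat ->
  mx_mul (2^N) (majorana N p) (majorana N p) a b = mx_id a b.
Proof. intros; rewrite majorana_eq; apply pauli_sq; auto. Qed.

Lemma maj_herm N p a b : mx_adj (majorana N p) a b = majorana N p a b.
Proof. rewrite majorana_eq; apply pauli_herm. Qed.

Definition pauli_on (N k l : nat) : Mx := pauli_string N (fun j => if (j =? k)%nat then l else 0%nat).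

Definition X_on (N k : nat) : Mx := pauli_on N k 1.

Definition Z_on (N k : nat) : Mx := pauli_on N k 3.

Lemma maj_pauli_on N p k l a b : (k < N)%nat ->
  mx_mul (2^N) (majorana N p) (pauli_on N k l) a b =
  Cmul (RtoC (pauli_comm_sign (maj_label p k) l)) (mx_mul (2^N) (pauli_on N k l) (majorana N p) a b).
Proof.
  intros. unfold pauli_on. rewrite majorana_eq, pauli_comm.
  rewrite (cprod_single _ _ k); auto.
  - rewrite Nat.eqb_refl; auto.
  - intros. destruct (Nat.eqb_spec k0 k); try lia. unfold pauli_comm_sign. simpl.
    rewrite Bool.orb_true_r. Ceq.
Qed.

(* Below both sites a pair acts as [Z Z] (or identity) at qubit [k], above both
   sites trivially: in either case the two signs cancel. *)
Lemma pair_sign_outside p q k : (1 <= p)%nat -> (1 <= q)%nat ->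
  ((k < maj_qubit p)%nat /\ (k < maj_qubit q)%nat) \/ ((maj_qubit p < k)%nat /\ (maj_qubit q < k)%nat) ->
  pauli_comm_sign (maj_label q k) 1 * pauli_comm_sign (maj_label p k) 1 = 1 /\ pauli_comm_sign (maj_label q k) 3 * pauli_comm_sign (maj_label p k) 3 = 1.
Proof.
  intros.
  destruct (maj_parity_cases p) as [[Hp Ep]|[Hp Ep]]; auto;
  destruct (maj_parity_cases q) as [[Hq Eq]|[Hq Eq]]; auto;
  unfold maj_label; rewrite ?Hp, ?Hq;
  destruct (Nat.ltb_spec k (maj_qubit p)); destruct (Nat.eqb_spec k (maj_qubit p));
  destruct (Nat.ltb_spec k (maj_qubit q)); destruct (Nat.eqb_spec k (maj_qubit q)); try lia;
  unfold pauli_comm_sign; simpl; split; lra.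
Qed.

Fixpoint toggle (p : nat) (l : list nat) : list nat :=
  match l with
  | [] => [p]
  | x :: l' => if (p <? x)%nat then p :: l else if (p =? x)%nat then l' else x :: toggle p l'
  end.

Definition in_range N (l : list nat) := Forall (fun p => (1 <= p <= 2 * N)%nat) l.

Lemma maj_mono_toggle N p l : (1 <= p <= 2 * N)%nat -> in_range N l ->
  exists s, (s = C1 \/ s = Copp C1) /\
  mx_eq (2^N) (mx_mul (2^N) (majorana N p) (monomial N l)) (mx_scale s (monomial N (toggle p l))).
Proof.
  intros Hp Hl. induction l as [|x l IH]; simpl.
  - exists C1; split; auto. intros i j _ _. unfold mx_scale. ring.
  - inversion Hl; subst. destruct (Nat.ltb_spec p x).
    + exists C1; split; auto. intros i j _ _. unfold mx_scale; simpl. ring.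
    + destruct (Nat.eqb_spec p x).
      * subst. exists C1; split; auto. intros i j Hi Hj. unfold mx_scale.
        rewrite <- mx_mul_assoc. rewrite (mx_mul_meq_l _ _ mx_id) by (auto; intros a b Ha Hb; apply maj_sq; auto).
        rewrite mx_mul_id_l by auto. ring.
      * destruct (IH H2) as [s [Hs E]]. exists (Copp s); split.
        { destruct Hs; subst; [right; auto|left; ring]. }
        intros i j Hi Hj. simpl. unfold mx_scale.
        rewrite <- mx_mul_assoc.
        assert (E2: forall a b, mx_mul (2^N) (majorana N p) (majorana N x) a b =
                   mx_scale (Copp C1) (mx_mul (2^N) (majorana N x) (majorana N p)) a b).
        { intros. unfold mx_scale. rewrite maj_anticomm by (auto; lia). ring. }
        rewrite (mx_mul_meq_l _ _ (mx_scale (Copp C1) (mx_mul (2^N) (majorana N x) (majorana N p))))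
          by (auto; intros a b _ _; apply E2).
        rewrite mx_mul_scale_l, mx_mul_assoc.
        rewrite (mx_mul_meq_r _ _ _ (mx_scale s (monomial N (toggle p l)))) by auto.
        rewrite mx_mul_scale_r. ring.
Qed.

Definition pass_sign (p : nat) (l : list nat) : R :=
  fold_right (fun x acc => (if (x =? p)%nat then 1 else -1) * acc) 1 l.

Lemma maj_mono_comm N p l : (1 <= p <= 2 * N)%nat -> in_range N l ->
  mx_eq (2^N) (mx_mul (2^N) (majorana N p) (monomial N l))
            (mx_scale (RtoC (pass_sign p l)) (mx_mul (2^N) (monomial N l) (majorana N p))).
Proof.
  intros Hp Hl. induction l as [|x l IH]; simpl; intros i j Hi Hj.
  - unfold mx_scale. rewrite mx_mul_id_l, mx_mul_id_r by auto. Ceq.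
  - inversion Hl; subst. unfold mx_scale.
    rewrite <- mx_mul_assoc.
    assert (E2: forall a b, mx_mul (2^N) (majorana N p) (majorana N x) a b =
               mx_scale (RtoC (if (x =? p)%nat then 1 else -1)) (mx_mul (2^N) (majorana N x) (majorana N p)) a b).
    { intros. unfold mx_scale. destruct (Nat.eqb_spec x p). subst. Ceq.
      rewrite maj_anticomm by (auto; lia). Ceq. }
    rewrite (mx_mul_meq_l _ _ (mx_scale _ (mx_mul (2^N) (majorana N x) (majorana N p))))
          by (auto; intros a b _ _; apply E2).
    rewrite mx_mul_scale_l, mx_mul_assoc.
    rewrite (mx_mul_meq_r _ _ _ _ _ _ (IH H2)) by auto.
    rewrite mx_mul_scale_r. rewrite <- mx_mul_assoc. rewrite RtoC_mul. ring.
Qed.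

(* A matrix anticommuting with [c_p] is traceless ([c_p^2 = 1] and the trace is cyclic). *)
Lemma trace_zero_of_anticommuting N p A : (1 <= p <= 2 * N)%nat ->
  mx_eq (2^N) (mx_mul (2^N) (majorana N p) A) (mx_scale (Copp C1) (mx_mul (2^N) A (majorana N p))) ->
  mx_trace (2^N) A = C0.
Proof.
  intros Hp H.
  assert (T1: mx_trace (2^N) (mx_mul (2^N) (majorana N p) (mx_mul (2^N) A (majorana N p))) = mx_trace (2^N) A).
  { rewrite mx_trace_comm. apply mx_trace_meq. intros i j Hi Hj.
    rewrite mx_mul_assoc. rewrite (mx_mul_meq_r _ _ _ mx_id) by (auto; intros a b Ha Hb; apply maj_sq; auto).
    apply mx_mul_id_r; auto. }
  assert (T2: mx_trace (2^N) (mx_mul (2^N) (majorana N p) (mx_mul (2^N) A (majorana N p))) = Copp (mx_trace (2^N) A)).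
  { unfold mx_trace at 2. rewrite <- csum_opp. unfold mx_trace. apply csum_ext. intros k Hk.
    rewrite <- mx_mul_assoc. rewrite (mx_mul_meq_l _ _ _ _ _ _ H) by auto.
    rewrite mx_mul_scale_l, mx_mul_assoc.
    rewrite (mx_mul_meq_r _ _ _ mx_id) by (auto; intros a b Ha Hb; apply maj_sq; auto).
    rewrite mx_mul_id_r by auto. ring. }
  rewrite T1 in T2. set (t := mx_trace (2^N) A) in *.
  apply C_ext; destruct t; simpl; injection T2; intros; lra.
Qed.

Lemma pow_m1 n : (-1)^n = if Nat.even n then 1 else -1.
Proof.
  induction n. simpl; auto. rewrite Nat.even_succ, <- Nat.negb_even. simpl pow. rewrite IHn.
  destruct (Nat.even n); simpl; lra.
Qed.

Lemma pass_sign_formula p l : NoDup l ->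
  pass_sign p l = (-1)^(length l) * (if in_dec Nat.eq_dec p l then -1 else 1).
Proof.
  induction l as [|x l IH]; intros H. simpl. lra.
  inversion H; subst. change (pass_sign p (x :: l)) with ((if (x =? p)%nat then 1 else -1) * pass_sign p l). rewrite IH by auto.
  change (length (x :: l)) with (S (length l)). rewrite <- tech_pow_Rmult.
  destruct (Nat.eqb_spec x p).
  - subst. destruct (in_dec Nat.eq_dec p l); try tauto.
    destruct (in_dec Nat.eq_dec p (p :: l)). lra. exfalso; apply n0; left; auto.
  - destruct (in_dec Nat.eq_dec p l); destruct (in_dec Nat.eq_dec p (x :: l)).
    lra. exfalso; apply n0; right; auto. destruct i; [congruence|tauto]. lra.
Qed.

(* Every nonempty Majorana monomial is traceless: some [c_p] anticommutes with it
   (any element of it if its length is even, any missing index if it is odd). *)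
Lemma trace_mono_zero N l : NoDup l -> in_range N l -> l <> [] ->
  mx_trace (2^N) (monomial N l) = C0.
Proof.
  intros Hnd Hr Hne.
  assert (exists p, (1 <= p <= 2 * N)%nat /\ pass_sign p l = -1) as [p [Hp Hs]].
  { destruct (Nat.even (length l)) eqn:Ev.
    - destruct l as [|x l']; [congruence|]. exists x. inversion Hr; subst. split; auto.
      rewrite pass_sign_formula by auto. rewrite pow_m1, Ev.
      destruct (in_dec Nat.eq_dec x (x :: l')). lra. exfalso; apply n; left; auto.
    - destruct (Classical_Prop.classic (exists p, (1 <= p <= 2 * N)%nat /\ ~ In p l)) as [[p [Hp Hn]]|Hc].
      + exists p; split; auto. rewrite pass_sign_formula by auto. rewrite pow_m1, Ev.
        destruct (in_dec Nat.eq_dec p l); try tauto. lra.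
      + exfalso. assert (incl (seq 1 (2*N)) l).
        { intros y Hy. apply in_seq in Hy. destruct (Classical_Prop.classic (In y l)); auto.
          exfalso; apply Hc; exists y; split; auto; lia. }
        assert (incl l (seq 1 (2*N))).
        { intros y Hy. apply in_seq. unfold in_range in Hr; rewrite Forall_forall in Hr. specialize (Hr y Hy). lia. }
        apply NoDup_incl_length in H; [|apply seq_NoDup].
        apply NoDup_incl_length in H0; auto. rewrite length_seq in *.
        assert (length l = 2 * N)%nat by lia. rewrite H1 in Ev.
        rewrite Nat.even_mul in Ev. simpl in Ev. congruence. }
  apply (trace_zero_of_anticommuting N p); auto.
  intros i j Hi Hj. rewrite (maj_mono_comm N p l Hp Hr i j Hi Hj). rewrite Hs. unfold mx_scale. f_equal. Ceq.
Qed.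

(* Bit masks: [mask_indices N m] is the sorted list of [p] in [1..2N] with bit
   [p-1] of [m] set; every Majorana monomial is [mask_monomial N m] for a unique
   mask [m < 2^(2N)]. *)
Definition mask_indices (N m : nat) : list nat := filter (fun p => Nat.testbit m (p - 1)) (seq 1 (2 * N)).

Lemma in_mask_indices N m x : In x (mask_indices N m) <-> ((1 <= x <= 2 * N)%nat /\ Nat.testbit m (x - 1) = true).
Proof. unfold mask_indices. rewrite filter_In, in_seq. split; intros [A B]; split; auto; lia. Qed.

Lemma sorted_seq a n : StronglySorted lt (seq a n).
Proof.
  revert a; induction n; intros; simpl; constructor; auto.
  apply Forall_forall. intros x Hx. apply in_seq in Hx. lia.
Qed.

Lemma sorted_filter (f : nat -> bool) l : StronglySorted lt l -> StronglySorted lt (filter f l).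
Proof.
  induction l; intros H; simpl; auto. inversion H; subst.
  destruct (f a); auto. constructor; auto.
  rewrite Forall_forall in *. intros x Hx. apply filter_In in Hx. apply H3; tauto.
Qed.

Lemma mask_indices_sorted N m : StronglySorted lt (mask_indices N m).
Proof. apply sorted_filter, sorted_seq. Qed.

Lemma mask_indices_NoDup N m : NoDup (mask_indices N m).
Proof. apply NoDup_filter, seq_NoDup. Qed.

Lemma mask_indices_in_range N m : in_range N (mask_indices N m).
Proof. unfold in_range. apply Forall_forall. intros x Hx. apply in_mask_indices in Hx. tauto. Qed.

Lemma toggle_spec p l : StronglySorted lt l ->
  StronglySorted lt (toggle p l) /\
  (forall x, In x (toggle p l) <-> (x = p /\ ~ In p l) \/ (x <> p /\ In x l)).
Proof.
  induction l as [|y l IH]; intros H.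
  - simpl. split. constructor; constructor. intros x; split; intros.
    destruct H0 as [H0|[]]; subst; left; auto. destruct H0 as [[A _]|[_ []]]; left; auto.
  - inversion H; subst. rewrite Forall_forall in H3. simpl.
    destruct (Nat.ltb_spec p y).
    + split. constructor; auto. apply Forall_forall. intros z Hz. destruct Hz; subst; auto.
      specialize (H3 z H1); lia.
      intros x; split; intros.
      * destruct H1 as [H1|H1]. subst. left; split; auto. intros [E|E]; [lia|]. specialize (H3 _ E); lia.
        right. split; auto. intro; subst. destruct H1 as [E|E]; [lia|]. specialize (H3 _ E); lia.
      * destruct H1 as [[A B]|[A B]]. left; auto. right; auto.
    + destruct (Nat.eqb_spec p y).
      * subst. split; auto. intros x; split; intros.
        right. split. intro; subst. specialize (H3 _ H1); lia. right; auto.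
        destruct H1 as [[A B]|[A [B|B]]]. exfalso; apply B; left; auto. congruence. auto.
      * destruct (IH H2) as [S1 S2]. split.
        constructor; auto. apply Forall_forall. intros z Hz. apply S2 in Hz.
        destruct Hz as [[A _]|[_ A]]; subst; try lia. apply H3; auto.
        intros x. simpl. rewrite S2. split; intros.
        -- destruct H1 as [H1|[[A B]|[A B]]]. subst. right; split; auto.
           left; split; auto. intros [E|E]; auto.
           right; split; auto.
        -- destruct H1 as [[A B]|[A [B|B]]]. right; left; split; auto.
           left; auto. right; right; auto.
Qed.

Lemma sorted_unique (l1 l2 : list nat) : StronglySorted lt l1 -> StronglySorted lt l2 ->
  (forall x, In x l1 <-> In x l2) -> l1 = l2.
Proof.
  revert l2; induction l1 as [|x l1 IH]; intros l2 H1 H2 E.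
  - destruct l2 as [|y l2]; auto. exfalso. apply (E y); left; auto.
  - destruct l2 as [|y l2]. exfalso. apply (E x); left; auto.
    inversion H1; subst. inversion H2; subst. rewrite Forall_forall in *.
    assert (x = y).
    { destruct (E x) as [A _]. destruct (A (or_introl eq_refl)) as [B|B]; auto.
      destruct (E y) as [_ C]. destruct (C (or_introl eq_refl)) as [D|D]; auto.
      specialize (H6 _ B). specialize (H4 _ D). lia. }
    subst. f_equal. apply IH; auto. intros z. split; intros.
    destruct (E z) as [A _]. destruct (A (or_intror H)); auto. subst. specialize (H4 _ H); lia.
    destruct (E z) as [_ A]. destruct (A (or_intror H)); auto. subst. specialize (H6 _ H); lia.
Qed.

Lemma toggle_mask_indices N m p : (1 <= p <= 2 * N)%nat ->
  toggle p (mask_indices N m) = mask_indices N (Nat.lxor m (2 ^ (p - 1))).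
Proof.
  intros Hp. destruct (toggle_spec p (mask_indices N m) (mask_indices_sorted N m)) as [S1 S2].
  apply sorted_unique; auto. apply mask_indices_sorted.
  intros x. rewrite S2, !in_mask_indices. rewrite Nat.lxor_spec, Nat.pow2_bits_eqb.
  split; intros.
  - destruct H as [[A B]|[A [B C]]].
    + subst. split; auto. rewrite Nat.eqb_refl. destruct (Nat.testbit m (p-1)); auto; exfalso; apply B; auto.
    + split; auto. rewrite C. destruct (Nat.eqb_spec (p-1) (x-1)); auto; lia.
  - destruct H as [A B]. destruct (Nat.eq_dec x p).
    + subst. left; split; auto. rewrite Nat.eqb_refl in B. intros [_ C]; rewrite C in B; discriminate.
    + right; split; auto. split; auto. destruct (Nat.eqb_spec (p-1) (x-1)); try lia.
      destruct (Nat.testbit m (x-1)); auto.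
Qed.

Lemma mask_indices_nil N m : (m < 2 ^ (2 * N))%nat -> mask_indices N m = [] -> m = 0%nat.
Proof.
  intros Hm E. apply (bits_eq m 0 (2*N)); auto. apply Nat.neq_0_lt_0, Nat.pow_nonzero; lia.
  intros n Hn. rewrite Nat.bits_0. destruct (Nat.testbit m n) eqn:B; auto.
  assert (In (S n) (mask_indices N m)). apply in_mask_indices. split. lia. simpl. rewrite Nat.sub_0_r; auto.
  rewrite E in H; destruct H.
Qed.

Lemma mask_indices_0 N : mask_indices N 0 = [].
Proof.
  unfold mask_indices. induction (seq 1 (2*N)); simpl; auto. rewrite Nat.bits_0; auto.
Qed.

Lemma monomial_index_mask N ps : monomial_index N ps -> exists m, (m < 2^(2*N))%nat /\ mask_indices N m = ps.
Proof.
  intros [Hs Hr].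
  destruct (mask_exists (2*N) (fun i => if in_dec Nat.eq_dec (S i) ps then true else false)) as [m [Hm Hb]].
  exists m; split; auto. apply sorted_unique. apply mask_indices_sorted.
  apply Sorted_StronglySorted; auto. intros a b c; lia.
  intros x. rewrite in_mask_indices. rewrite Forall_forall in Hr. split.
  - intros [A B]. rewrite Hb in B by lia. replace (S (x-1)) with x in B by lia.
    destruct (in_dec Nat.eq_dec x ps); auto; discriminate.
  - intros H. specialize (Hr x H). split; auto. rewrite Hb by lia. replace (S (x-1)) with x by lia.
    destruct (in_dec Nat.eq_dec x ps); auto.
Qed.

Definition mask_monomial N m := monomial N (mask_indices N m).

Definition flip_pair p q m := Nat.lxor (Nat.lxor m (2 ^ (p - 1))) (2 ^ (q - 1)).

Lemma flip_pair_invol p q m : flip_pair p q (flip_pair p q m) = m.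
Proof.
  unfold flip_pair. apply Nat.bits_inj; intro n. rewrite !Nat.lxor_spec.
  destruct (Nat.testbit m n), (Nat.testbit (2^(p-1)) n), (Nat.testbit (2^(q-1)) n); auto.
Qed.

Lemma flip_pair_lt N p q m : (1 <= p <= 2 * N)%nat -> (1 <= q <= 2 * N)%nat -> (m < 2^(2*N))%nat ->
  (flip_pair p q m < 2^(2*N))%nat.
Proof.
  intros. unfold flip_pair. repeat apply xor_lt; auto; apply pow2_lt; lia.
Qed.

Lemma pair_action N p q m : (1 <= p <= 2 * N)%nat -> (1 <= q <= 2 * N)%nat ->
  exists s, (s = C1 \/ s = Copp C1) /\
  mx_eq (2^N) (mx_mul (2^N) (majorana N q) (mx_mul (2^N) (majorana N p) (mask_monomial N m)))
            (mx_scale s (mask_monomial N (flip_pair p q m))).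
Proof.
  intros Hp Hq. unfold mask_monomial.
  destruct (maj_mono_toggle N p (mask_indices N m) Hp (mask_indices_in_range N m)) as [s1 [Hs1 E1]].
  rewrite toggle_mask_indices in E1 by auto.
  destruct (maj_mono_toggle N q (mask_indices N (Nat.lxor m (2 ^ (p - 1)))) Hq (mask_indices_in_range _ _)) as [s2 [Hs2 E2]].
  rewrite toggle_mask_indices in E2 by auto.
  exists (Cmul s1 s2). split.
  { destruct Hs1, Hs2; subst; [left|right|right|left]; ring. }
  intros i j Hi Hj. rewrite (mx_mul_meq_r _ _ _ _ _ _ E1) by auto.
  rewrite mx_mul_scale_r, E2 by auto. unfold mx_scale, flip_pair. ring.
Qed.

Lemma X_on_entry N k c b : (k < N)%nat -> (c < 2^N)%nat -> (b < 2^N)%nat ->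
  X_on N k c b = mx_id c (Nat.lxor b (2^k)).
Proof.
  intros. unfold X_on, pauli_on. rewrite pauli_string_tensor. rewrite <- (tensor_mx_id N) by (auto; apply xor_lt; auto; apply pow2_lt; auto).
  unfold tensor_mx. apply cprod_ext; intros j Hj. rewrite Nat.lxor_spec, Nat.pow2_bits_eqb.
  rewrite (Nat.eqb_sym k j). destruct (Nat.eqb_spec j k); unfold qubit_id;
  destruct (Nat.testbit c j), (Nat.testbit b j); simpl; auto.
Qed.

Definition z_sign (k b : nat) : C := if Nat.testbit b k then Copp C1 else C1.

Lemma Z_on_entry N k c b : (k < N)%nat -> (c < 2^N)%nat -> (b < 2^N)%nat ->
  Z_on N k c b = Cmul (mx_id c b) (z_sign k b).
Proof.
  intros. unfold Z_on, pauli_on. rewrite pauli_string_tensor. rewrite <- (tensor_mx_id N) by auto.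
  assert (Hz: cprod (fun j => if (j =? k)%nat then z_sign k b else C1) N = z_sign k b).
  { rewrite (cprod_single _ _ k); auto. rewrite Nat.eqb_refl; auto.
    intros. destruct (Nat.eqb_spec k0 k); auto; lia. }
  unfold tensor_mx. rewrite <- Hz.
  rewrite <- cprod_mul. apply cprod_ext; intros j Hj.
  unfold z_sign. destruct (Nat.eqb_spec j k) as [->|]; unfold qubit_id;
  [destruct (Nat.testbit c k) eqn:E1, (Nat.testbit b k) eqn:E2
  |destruct (Nat.testbit c j) eqn:E1, (Nat.testbit b j) eqn:E2]; simpl; Ceq.
Qed.

Definition commutes_XZ N k M :=
  mx_eq (2^N) (mx_mul (2^N) M (X_on N k)) (mx_mul (2^N) (X_on N k) M) /\
  mx_eq (2^N) (mx_mul (2^N) M (Z_on N k)) (mx_mul (2^N) (Z_on N k) M).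

Lemma commutes_XZ_trivial N k M : (k < N)%nat -> commutes_XZ N k M -> acts_trivially_on N k M.
Proof.
  intros Hk [HX HZ] a b Ha Hb.
  assert (Hxa : (Nat.lxor a (2^k) < 2^N)%nat) by (apply xor_lt; auto; apply pow2_lt; auto).
  assert (Hxb : (Nat.lxor b (2^k) < 2^N)%nat) by (apply xor_lt; auto; apply pow2_lt; auto).
  split.
  - intros Hd. specialize (HZ a b Ha Hb). unfold mx_mul in HZ.
    rewrite (csum_single _ _ b) in HZ by (auto; intros c Hc Hcb; rewrite Z_on_entry by auto;
      unfold mx_id; destruct (Nat.eqb_spec c b); try lia; ring).
    rewrite (csum_single _ _ a) in HZ by (auto; intros c Hc Hcb; rewrite Z_on_entry by auto;
      unfold mx_id; destruct (Nat.eqb_spec a c); try lia; ring).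
    rewrite !Z_on_entry in HZ by auto. unfold mx_id in HZ. rewrite !Nat.eqb_refl in HZ.
    unfold z_sign in HZ. destruct (Nat.testbit a k), (Nat.testbit b k); try congruence;
    destruct (M a b); apply C_ext; simpl; injection HZ; intros; simpl in *; lra.
  - specialize (HX a (Nat.lxor b (2^k)) Ha Hxb). unfold mx_mul in HX.
    rewrite (csum_single _ _ b) in HX.
    2: auto.
    2:{ intros c Hc Hcb. rewrite X_on_entry by auto. rewrite xor_invol. unfold mx_id.
        destruct (Nat.eqb_spec c b); try lia; ring. }
    rewrite (csum_single _ _ (Nat.lxor a (2^k))) in HX.
    2: auto.
    2:{ intros c Hc Hcb. rewrite X_on_entry by auto. unfold mx_id.
        destruct (Nat.eqb_spec a (Nat.lxor c (2^k))); try ring. exfalso; apply Hcb; subst; rewrite xor_invol; auto. }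
    rewrite !X_on_entry in HX by auto. rewrite xor_invol in HX. unfold mx_id in HX.
    rewrite Nat.eqb_refl in HX. rewrite xor_invol in HX. rewrite Nat.eqb_refl in HX.
    replace (M a b) with (Cmul (M a b) C1) by ring. rewrite HX. ring.
Qed.

Definition scomm N (X : Mx) (s : C) (A : Mx) :=
  forall i j, (i < 2^N)%nat -> (j < 2^N)%nat -> mx_mul (2^N) A X i j = Cmul s (mx_mul (2^N) X A i j).

Lemma scomm_mul N X s t A B : scomm N X s A -> scomm N X t B -> scomm N X (Cmul s t) (mx_mul (2^N) A B).
Proof.
  intros HA HB i j Hi Hj.
  rewrite mx_mul_assoc. rewrite (mx_mul_meq_r _ _ _ (mx_scale t (mx_mul (2^N) X B))) by (auto; intros a b Ha Hb; apply HB; auto).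
  rewrite mx_mul_scale_r, <- mx_mul_assoc.
  rewrite (mx_mul_meq_l _ _ (mx_scale s (mx_mul (2^N) X A))) by (auto; intros a b Ha Hb; apply HA; auto).
  rewrite mx_mul_scale_l, mx_mul_assoc. ring.
Qed.

Lemma scomm_mx_eq N X s A A' : mx_eq (2^N) A A' -> scomm N X s A -> scomm N X s A'.
Proof.
  intros E H i j Hi Hj. rewrite <- (mx_mul_meq_l _ _ _ _ _ _ E) by auto.
  rewrite <- (mx_mul_meq_r _ _ _ _ _ _ E) by auto. apply H; auto.
Qed.

Lemma scomm_scale N X s c A : scomm N X s A -> scomm N X s (mx_scale c A).
Proof.
  intros H i j Hi Hj. rewrite mx_mul_scale_l, mx_mul_scale_r, H by auto. ring.
Qed.

Lemma commutes_XZ_scomm N k M : commutes_XZ N k M <-> scomm N (X_on N k) C1 M /\ scomm N (Z_on N k) C1 M.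
Proof.
  unfold commutes_XZ, scomm, mx_eq. split; intros [A B]; split; intros i j Hi Hj;
  [rewrite A| rewrite B| rewrite A| rewrite B]; auto; ring.
Qed.

(* Outside the qubit range between the sites of [p] and [q] the signs of [c_p]
   and [c_q] cancel, so the pair [c_q c_p] preserves commutation with [X_k], [Z_k]. *)
Lemma comm_pair N p q k M : (1 <= p <= 2 * N)%nat -> (1 <= q <= 2 * N)%nat -> (k < N)%nat ->
  ((k < maj_qubit p)%nat /\ (k < maj_qubit q)%nat) \/ ((maj_qubit p < k)%nat /\ (maj_qubit q < k)%nat) ->
  commutes_XZ N k M -> commutes_XZ N k (mx_mul (2^N) (majorana N q) (mx_mul (2^N) (majorana N p) M)).
Proof.
  intros Hp Hq Hk Hout HM. apply commutes_XZ_scomm in HM. destruct HM as [HX HZ].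
  destruct (pair_sign_outside p q k) as [SX SZ]; try lia; auto.
  assert (EX: Cmul (RtoC (pauli_comm_sign (maj_label q k) 1)) (Cmul (RtoC (pauli_comm_sign (maj_label p k) 1)) C1) = C1).
  { apply C_ext; simpl; nra. }
  assert (EZ: Cmul (RtoC (pauli_comm_sign (maj_label q k) 3)) (Cmul (RtoC (pauli_comm_sign (maj_label p k) 3)) C1) = C1).
  { apply C_ext; simpl; nra. }
  apply commutes_XZ_scomm. split.
  - rewrite <- EX. apply scomm_mul. intros i j _ _; apply maj_pauli_on; auto.
    apply scomm_mul; auto. intros i j _ _; apply maj_pauli_on; auto.
  - rewrite <- EZ. apply scomm_mul. intros i j _ _; apply maj_pauli_on; auto.
    apply scomm_mul; auto. intros i j _ _; apply maj_pauli_on; auto.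
Qed.

Lemma commutes_XZ_flip_pair N p q k m : (1 <= p <= 2 * N)%nat -> (1 <= q <= 2 * N)%nat -> (k < N)%nat ->
  ((k < maj_qubit p)%nat /\ (k < maj_qubit q)%nat) \/ ((maj_qubit p < k)%nat /\ (maj_qubit q < k)%nat) ->
  commutes_XZ N k (mask_monomial N m) -> commutes_XZ N k (mask_monomial N (flip_pair p q m)).
Proof.
  intros Hp Hq Hk Hout H.
  destruct (pair_action N p q m Hp Hq) as [s [Hs E]].
  pose proof (comm_pair N p q k (mask_monomial N m) Hp Hq Hk Hout H) as H2.
  apply commutes_XZ_scomm in H2. destruct H2 as [A B].
  assert (E2: mx_eq (2^N) (mx_scale s (mx_mul (2 ^ N) (majorana N q) (mx_mul (2 ^ N) (majorana N p) (mask_monomial N m))))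
                        (mask_monomial N (flip_pair p q m))).
  { intros i j Hi Hj. unfold mx_scale. rewrite E by auto. unfold mx_scale.
    destruct Hs; subst; ring. }
  apply commutes_XZ_scomm. split; eapply scomm_mx_eq; eauto; apply scomm_scale; auto.
Qed.

Lemma bool_of_true P : bool_of P = true <-> P.
Proof. unfold bool_of. destruct (excluded_middle_informative P); split; intros; auto; try discriminate; tauto. Qed.

Lemma filter_length_mono (f g : nat -> bool) l : (forall x, In x l -> f x = true -> g x = true) ->
  (length (filter f l) <= length (filter g l))%nat.
Proof.
  induction l; intros H; simpl; auto.
  destruct (f a) eqn:Ef. rewrite (H a) by (auto; left; auto). simpl.
  apply le_n_S, IHl; intros; apply H; auto; right; auto.
  destruct (g a); simpl; [apply le_S|]; apply IHl; intros; apply H; auto; right; auto.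
Qed.

Lemma filter_length_cover (f g h : nat -> bool) l : (forall x, In x l -> f x = true -> g x = true \/ h x = true) ->
  (length (filter f l) <= length (filter g l) + length (filter h l))%nat.
Proof.
  induction l; intros H; simpl; auto.
  assert (IH := IHl (fun x Hx => H x (or_intror Hx))).
  destruct (f a) eqn:Ef.
  - destruct (H a (or_introl eq_refl) Ef) as [G|G]; rewrite G; simpl;
    destruct (g a), (h a); simpl; lia.
  - destruct (g a), (h a); simpl; lia.
Qed.

Lemma filter_length_or (g h : nat -> bool) l :
  (length (filter (fun x => orb (g x) (h x)) l) <= length (filter g l) + length (filter h l))%nat.
Proof. induction l; simpl; auto. destruct (g a), (h a); simpl; lia. Qed.

Lemma interval_count a b s n :
  (length (filter (fun k => andb (a <=? k) (k <=? b))%nat (seq s n)) <= b + 1 - Nat.max a s)%nat.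
Proof.
  revert s; induction n; intros s; simpl. lia.
  specialize (IHn (S s)).
  destruct (Nat.leb_spec a s), (Nat.leb_spec s b); simpl; lia.
Qed.

Definition moves_qubit N M k := negb (bool_of (commutes_XZ N k M)).

Definition support_bound N M := length (filter (moves_qubit N M) (seq 0 N)).

Definition mask_weight N m := length (mask_indices N m).

Lemma qubit_weight_le_support N M : (qubit_weight N M <= support_bound N M)%nat.
Proof.
  unfold qubit_weight, support_bound. apply filter_length_mono. intros k Hk H. apply in_seq in Hk.
  unfold moves_qubit. destruct (bool_of (commutes_XZ N k M)) eqn:E; auto.
  apply (proj1 (bool_of_true _)) in E. apply commutes_XZ_trivial in E; [|lia].
  apply (proj2 (bool_of_true _)) in E. rewrite E in H. discriminate.
Qed.

Definition pair_span p q := (Nat.max (maj_qubit p) (maj_qubit q) + 1 - Nat.min (maj_qubit p) (maj_qubit q))%nat.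

Lemma support_flip_pair N p q m : (1 <= p <= 2 * N)%nat -> (1 <= q <= 2 * N)%nat ->
  (support_bound N (mask_monomial N m) <= support_bound N (mask_monomial N (flip_pair p q m)) + pair_span p q)%nat.
Proof.
  intros Hp Hq. unfold support_bound, pair_span.
  eapply Nat.le_trans.
  apply (filter_length_cover _ (moves_qubit N (mask_monomial N (flip_pair p q m))) (fun k => andb (Nat.min (maj_qubit p) (maj_qubit q) <=? k) (k <=? Nat.max (maj_qubit p) (maj_qubit q)))%nat).
  2:{ apply Nat.add_le_mono_l. eapply Nat.le_trans. apply interval_count. lia. }
  intros k Hk H. apply in_seq in Hk.
  destruct (Nat.leb_spec (Nat.min (maj_qubit p) (maj_qubit q)) k), (Nat.leb_spec k (Nat.max (maj_qubit p) (maj_qubit q))); simpl;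
  try (right; reflexivity).
  all: left; unfold moves_qubit in *; destruct (bool_of (commutes_XZ N k (mask_monomial N (flip_pair p q m)))) eqn:E; auto;
    apply (proj1 (bool_of_true _)) in E; apply (commutes_XZ_flip_pair N p q k) in E; try lia; rewrite flip_pair_invol in E;
    apply (proj2 (bool_of_true _)) in E; rewrite E in H; discriminate.
Qed.

Lemma mask_weight_flip_pair N p q m : (1 <= p <= 2 * N)%nat -> (1 <= q <= 2 * N)%nat ->
  (mask_weight N m <= mask_weight N (flip_pair p q m) + 2)%nat.
Proof.
  intros Hp Hq. unfold mask_weight, mask_indices.
  eapply Nat.le_trans.
  apply (filter_length_cover _ (fun p0 => Nat.testbit (flip_pair p q m) (p0 - 1)) (fun x => orb (andb (p <=? x) (x <=? p)) (andb (q <=? x) (x <=? q)))%nat).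
  2:{ apply Nat.add_le_mono_l. eapply Nat.le_trans. apply filter_length_or.
      pose proof (interval_count p p 1 (2*N)). pose proof (interval_count q q 1 (2*N)). lia. }
  intros x Hx H. apply in_seq in Hx.
  destruct (Nat.eq_dec x p). subst. right. rewrite !Nat.leb_refl; auto.
  destruct (Nat.eq_dec x q). subst. right. rewrite !Nat.leb_refl, Bool.orb_true_r; auto.
  left. unfold flip_pair. rewrite !Nat.lxor_spec, !Nat.pow2_bits_eqb, H.
  destruct (Nat.eqb_spec (p-1) (x-1)); try lia. destruct (Nat.eqb_spec (q-1) (x-1)); try lia. auto.
Qed.

Lemma Rpower_le_base_lt1 e x y : 0 < e < 1 -> y <= x -> Rpower e x <= Rpower e y.
Proof.
  intros He Hxy. unfold Rpower. assert (ln e < 0) by (rewrite <- ln_1; apply ln_increasing; lra).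
  destruct (Req_dec x y); [subst; lra |]. left. apply exp_increasing. nra.
Qed.

Lemma lam_bounds r : 1 <= r -> 2 / 3 <= lam r < 1.
Proof.
  intros Hr. unfold lam. split.
  - rewrite <- (Rpower_1 (2 / 3)) at 1 by lra. apply Rpower_le_base_lt1; [lra |].
    assert (/ (4 * r) <= / 4) by (apply Rinv_le_contravar; lra). lra.
  - rewrite <- (Rpower_O (2 / 3)) by lra. unfold Rpower. apply exp_increasing.
    assert (ln (2 / 3) < 0) by (rewrite <- ln_1; apply ln_increasing; lra).
    assert (0 < / (4 * r)) by (apply Rinv_0_lt_compat; lra). nra.
Qed.

Lemma sqrt_lam_bounds r : 1 <= r ->
  4 / 5 <= sqrt (lam r) < 1 /\ lam r = sqrt (lam r) * sqrt (lam r).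
Proof.
  intros Hr. destruct (lam_bounds r Hr) as [L1 L2].
  assert (HL : lam r = sqrt (lam r) * sqrt (lam r)) by (rewrite sqrt_sqrt; lra).
  assert (0 <= sqrt (lam r)) by apply sqrt_pos.
  split; [split; nra | exact HL].
Qed.

Definition weight N eps r m :=
  Rpower eps (INR (mask_weight N m) / 4) * lam r ^ support_bound N (mask_monomial N m).

Definition weight_ratio eps r p q := / (sqrt eps * lam r ^ pair_span (S p) (S q)).

Lemma weight_pos N eps r m : 0 < eps -> 1 <= r -> 0 < weight N eps r m.
Proof.
  intros He Hr. unfold weight. apply Rmult_lt_0_compat. unfold Rpower; apply exp_pos.
  apply pow_lt. destruct (lam_bounds r Hr); lra.
Qed.

(* Applying a pair costs at most [sqrt eps] in fermionic weight (2 flipped bits)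
   and [lam^span] in qubit weight. *)
Lemma weight_flip_pair N eps r m p q : 0 < eps < 1 -> 1 <= r -> (p < 2 * N)%nat -> (q < 2 * N)%nat ->
  weight N eps r (flip_pair (S p) (S q) m) <= weight_ratio eps r p q * weight N eps r m.
Proof.
  intros He Hr Hp Hq. destruct (lam_bounds r Hr) as [L1 L2].
  pose proof (mask_weight_flip_pair N (S p) (S q) m ltac:(lia) ltac:(lia)) as Hfw.
  pose proof (support_flip_pair N (S p) (S q) m ltac:(lia) ltac:(lia)) as Hsw.
  set (m' := flip_pair (S p) (S q) m) in *. set (sp := pair_span (S p) (S q)) in *.
  assert (Hse : 0 < sqrt eps) by (apply sqrt_lt_R0; lra).
  assert (0 < lam r ^ sp) by (apply pow_lt; lra).
  unfold weight_ratio. fold sp.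
  apply Rmult_le_reg_l with (sqrt eps * lam r ^ sp); [nra |].
  rewrite <- Rmult_assoc, Rinv_r, Rmult_1_l by nra.
  unfold weight. rewrite <- Rpower_sqrt by lra.
  replace (Rpower eps (/ 2) * lam r ^ sp *
           (Rpower eps (INR (mask_weight N m') / 4) * lam r ^ support_bound N (mask_monomial N m')))
    with (Rpower eps (INR (mask_weight N m') / 4 + / 2)
          * lam r ^ (support_bound N (mask_monomial N m') + sp))
    by (rewrite Rpower_plus, pow_add; ring).
  apply Rmult_le_compat.
  - left; apply exp_pos.
  - left; apply pow_lt; lra.
  - apply Rpower_le_base_lt1; [lra |].
    apply le_INR in Hfw. rewrite plus_INR in Hfw. simpl in Hfw. lra.
  - apply pow_le_exp; [lra | lia].
Qed.

Lemma rsum_deriv (F dF : nat -> R -> R) n u :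
  (forall k, (k < n)%nat -> derivable_pt_lim (F k) u (dF k u)) ->
  derivable_pt_lim (fun t => rsum (fun k => F k t) n) u (rsum (fun k => dF k u) n).
Proof.
  induction n; intros H; simpl.
  - apply derivable_pt_lim_const.
  - pose proof (derivable_pt_lim_plus _ _ _ _ _ (IHn (fun k Hk => H k ltac:(lia))) (H n ltac:(lia))) as D.
    exact D.
Qed.

Lemma rsum_limit (F : nat -> R -> R) n D x0 :
  (forall k, (k < n)%nat -> limit1_in (F k) D (F k x0) x0) ->
  limit1_in (fun t => rsum (fun k => F k t) n) D (rsum (fun k => F k x0) n) x0.
Proof.
  induction n; intros H; simpl.
  - apply (limit_free (fun _ => 0) D 0 x0).
  - apply limit_plus. apply IHn; intros; apply H; lia. apply H; lia.
Qed.

Definition has_cderiv (F : R -> C) (u : R) (F' : C) :=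
  derivable_pt_lim (fun t => Re (F t)) u (Re F') /\ derivable_pt_lim (fun t => Im (F t)) u (Im F').

Lemma has_cderiv_csum (F : nat -> R -> C) (F' : nat -> C) n u :
  (forall k, (k < n)%nat -> has_cderiv (F k) u (F' k)) -> has_cderiv (fun t => csum (fun k => F k t) n) u (csum F' n).
Proof.
  induction n; intros H; simpl.
  - split; apply derivable_pt_lim_const.
  - destruct (IHn (fun k Hk => H k ltac:(lia))) as [A B]. destruct (H n ltac:(lia)) as [A' B'].
    split. exact (derivable_pt_lim_plus _ _ _ _ _ A A'). exact (derivable_pt_lim_plus _ _ _ _ _ B B').
Qed.

Lemma has_cderiv_cmul c (F : R -> C) F' u : has_cderiv F u F' -> has_cderiv (fun t => Cmul c (F t)) u (Cmul c F').
Proof.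
  intros [A B]. simpl. split.
  - pose proof (derivable_pt_lim_scal _ (Re c) _ _ A) as A1.
    pose proof (derivable_pt_lim_scal _ (Im c) _ _ B) as B1.
    pose proof (derivable_pt_lim_minus _ _ _ _ _ A1 B1) as E. exact E.
  - pose proof (derivable_pt_lim_scal _ (Re c) _ _ B) as A1.
    pose proof (derivable_pt_lim_scal _ (Im c) _ _ A) as B1.
    pose proof (derivable_pt_lim_plus _ _ _ _ _ A1 B1) as E. exact E.
Qed.

Lemma omega_expand N E V : omega N E V =
  Cmul (RtoC (/ 2 ^ N)) (csum (fun a => csum (fun k => Cmul (Cconj (E k a)) (V k a)) (2^N)) (2^N)).
Proof. reflexivity. Qed.

Lemma has_cderiv_omega N E (U : R -> Mx) V u :
  (forall i j, (i < 2^N)%nat -> (j < 2^N)%nat -> has_cderiv (fun t => U t i j) u (V i j)) ->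
  has_cderiv (fun t => omega N E (U t)) u (omega N E V).
Proof.
  intros H. unfold omega. apply has_cderiv_cmul. apply has_cderiv_csum. intros a Ha. apply has_cderiv_csum. intros k Hk.
  apply has_cderiv_cmul. apply H; auto.
Qed.

Definition has_climit (F : R -> C) (t0 : R) :=
  limit1_in (fun t => Re (F t)) (fun t => 0 <= t <= 1) (Re (F t0)) t0 /\
  limit1_in (fun t => Im (F t)) (fun t => 0 <= t <= 1) (Im (F t0)) t0.

Lemma has_climit_csum (F : nat -> R -> C) n t0 :
  (forall k, (k < n)%nat -> has_climit (F k) t0) -> has_climit (fun t => csum (fun k => F k t) n) t0.
Proof.
  induction n; intros H; simpl.
  - split; apply (limit_free (fun _ => 0) _ 0 t0).
  - destruct (IHn (fun k Hk => H k ltac:(lia))) as [A B]. destruct (H n ltac:(lia)) as [A' B'].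
    split. exact (limit_plus _ _ _ _ _ _ A A'). exact (limit_plus _ _ _ _ _ _ B B').
Qed.

Lemma limit_const (c : R) D x0 : limit1_in (fun _ => c) D c x0.
Proof. exact (limit_free (fun _ => c) D 0 x0). Qed.

Lemma has_climit_cmul c (F : R -> C) t0 : has_climit F t0 -> has_climit (fun t => Cmul c (F t)) t0.
Proof.
  intros [A B]. simpl. split.
  - pose proof (limit_mul _ _ _ _ _ _ (limit_const (Re c) _ t0) A) as A1.
    pose proof (limit_mul _ _ _ _ _ _ (limit_const (Im c) _ t0) B) as B1.
    pose proof (limit_minus _ _ _ _ _ _ A1 B1) as E. exact E.
  - pose proof (limit_mul _ _ _ _ _ _ (limit_const (Re c) _ t0) B) as A1.
    pose proof (limit_mul _ _ _ _ _ _ (limit_const (Im c) _ t0) A) as B1.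
    pose proof (limit_plus _ _ _ _ _ _ A1 B1) as E. exact E.
Qed.

Lemma has_climit_omega N E (U : R -> Mx) t0 :
  (forall i j, (i < 2^N)%nat -> (j < 2^N)%nat -> has_climit (fun t => U t i j) t0) ->
  has_climit (fun t => omega N E (U t)) t0.
Proof.
  intros H. unfold omega. apply has_climit_cmul. apply has_climit_csum. intros a Ha. apply has_climit_csum. intros k Hk.
  apply has_climit_cmul. apply H; auto.
Qed.

Lemma omega_ext_V N E V V' : (forall i j, (i < 2^N)%nat -> (j < 2^N)%nat -> V i j = V' i j) ->
  omega N E V = omega N E V'.
Proof.
  intros H. rewrite !omega_expand. f_equal. apply csum_ext; intros. apply csum_ext; intros. rewrite H; auto.
Qed.

Lemma omega_meq_E N E E' V : mx_eq (2^N) E E' -> omega N E V = omega N E' V.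
Proof.
  intros H. rewrite !omega_expand. f_equal. apply csum_ext; intros. apply csum_ext; intros. rewrite H; auto.
Qed.

Lemma csum2_factor c (f : nat -> nat -> C) n m :
  csum (fun a => csum (fun k => Cmul c (f a k)) n) m = Cmul c (csum (fun a => csum (fun k => f a k) n) m).
Proof.
  rewrite <- csum_mul_l. apply csum_ext; intros. apply csum_mul_l.
Qed.

Lemma omega_scale_E N s E V : omega N (mx_scale s E) V = Cmul (Cconj s) (omega N E V).
Proof.
  rewrite !omega_expand.
  rewrite (csum_ext _ (fun a => csum (fun k => Cmul (Cconj s) (Cmul (Cconj (E k a)) (V k a))) (2 ^ N))).
  rewrite csum2_factor. ring.
  intros. apply csum_ext; intros. unfold mx_scale. rewrite Cconj_mul. ring.
Qed.

Lemma omega_lin N E (c : nat -> C) (M : nat -> Mx) n :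
  omega N E (fun i j => csum (fun p => Cmul (c p) (M p i j)) n) = csum (fun p => Cmul (c p) (omega N E (M p))) n.
Proof.
  rewrite omega_expand.
  rewrite (csum_ext _ (fun a => csum (fun p => csum (fun k => Cmul (c p) (Cmul (Cconj (E k a)) (M p k a))) (2^N)) n)).
  2:{ intros a Ha. rewrite <- csum_swap. apply csum_ext; intros k Hk. rewrite <- csum_mul_l.
      apply csum_ext; intros; ring. }
  rewrite csum_swap. rewrite <- csum_mul_l. apply csum_ext; intros p Hp.
  rewrite omega_expand. rewrite csum2_factor. ring.
Qed.

Lemma omega_sum N E (M : nat -> Mx) n :
  omega N E (fun i j => csum (fun p => M p i j) n) = csum (fun p => omega N E (M p)) n.
Proof.
  rewrite (omega_ext_V N E _ (fun i j => csum (fun p => Cmul C1 (M p i j)) n)).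
  rewrite omega_lin. apply csum_ext; intros; ring.
  intros; apply csum_ext; intros; ring.
Qed.

(* The generator [i Dhat(u)] is the combination [sum_{p,q} (-D_pq/4) c_p c_q];
   moving a pair from [V] into the first argument of [omega] uses that the
   Majoranas are hermitian. *)
Lemma Dhat_expand N D u V i j :
  mx_mul (2^N) (mx_scale Ci (Dhat N D u)) V i j =
  csum (fun p => csum (fun q => Cmul (RtoC (- / 4 * D u (S p) (S q)))
     (mx_mul (2^N) (mx_mul (2^N) (majorana N (S p)) (majorana N (S q))) V i j)) (2 * N)) (2 * N).
Proof.
  unfold Dhat. rewrite !mx_mul_scale_l, mx_mul_sum_l.
  rewrite <- !csum_mul_l. apply csum_ext; intros p Hp.
  rewrite mx_mul_sum_l. rewrite <- !csum_mul_l. apply csum_ext; intros q Hq.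
  rewrite mx_mul_scale_l. Ceq.
Qed.

Lemma omega_pair N E p q V :
  omega N E (mx_mul (2^N) (mx_mul (2^N) (majorana N p) (majorana N q)) V) =
  omega N (mx_mul (2^N) (majorana N q) (mx_mul (2^N) (majorana N p) E)) V.
Proof.
  unfold omega. f_equal. unfold mx_trace. apply csum_ext; intros a Ha.
  symmetry.
  rewrite (mx_mul_ext_l _ _ (mx_mul (2^N) (mx_mul (2^N) (mx_adj E) (majorana N p)) (majorana N q))).
  2:{ intros k. rewrite mx_adj_mul.
      transitivity (mx_mul (2^N) (mx_adj (mx_mul (2 ^ N) (majorana N p) E)) (majorana N q) a k).
      apply mx_mul_ext_r; intros; apply maj_herm.
      apply mx_mul_ext_l; intros k'; rewrite mx_adj_mul. apply mx_mul_ext_r; intros; apply maj_herm. }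
  rewrite !mx_mul_assoc. apply mx_mul_ext_r. intros k. rewrite mx_mul_assoc. auto.
Qed.

(* At time 0, [U = I]: the coefficient of the identity monomial is 1 and all
   others vanish (their trace is zero). *)
Lemma mask_monomial_0 N : mask_monomial N 0 = mx_id.
Proof. unfold mask_monomial. rewrite mask_indices_0. reflexivity. Qed.

Lemma support_bound_0 N : support_bound N (mask_monomial N 0) = 0%nat.
Proof.
  unfold support_bound. rewrite mask_monomial_0.
  assert (forall l, (forall k, In k l -> moves_qubit N mx_id k = false) -> length (filter (moves_qubit N mx_id) l) = 0%nat).
  { induction l; intros H; simpl; auto. rewrite H by (left; auto). apply IHl; intros; apply H; right; auto. }
  apply H. intros k _. unfold moves_qubit. destruct (bool_of (commutes_XZ N k mx_id)) eqn:E; auto.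
  exfalso. assert (commutes_XZ N k mx_id).
  { split; intros i j Hi Hj; rewrite mx_mul_id_l, mx_mul_id_r; auto. }
  apply (proj2 (bool_of_true _)) in H0. congruence.
Qed.

Lemma mask_weight_0 N : mask_weight N 0 = 0%nat.
Proof. unfold mask_weight. rewrite mask_indices_0. auto. Qed.

Lemma omega_initial N (U0 : Mx) m : (forall i j, (i < 2^N)%nat -> (j < 2^N)%nat -> U0 i j = mx_id i j) ->
  (m < 2^(2*N))%nat -> omega N (mask_monomial N m) U0 = if (m =? 0)%nat then C1 else C0.
Proof.
  intros H Hm. rewrite (omega_ext_V N _ U0 mx_id) by auto.
  rewrite omega_expand.
  rewrite (csum_ext _ (fun a => Cconj (mask_monomial N m a a))).
  2:{ intros a Ha. rewrite (csum_single _ _ a) by (auto; intros k Hk Hka; unfold mx_id;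
        destruct (Nat.eqb_spec k a); try lia; ring). unfold mx_id; rewrite Nat.eqb_refl; ring. }
  destruct (Nat.eqb_spec m 0).
  - subst. rewrite mask_monomial_0. rewrite (csum_ext _ (fun _ => RtoC 1)).
    2:{ intros; unfold mx_id; rewrite Nat.eqb_refl; Ceq. }
    assert (forall k, csum (fun _ => RtoC 1) k = RtoC (INR k)).
    { induction k. simpl; Ceq. simpl csum. rewrite IHk, S_INR. Ceq. }
    rewrite H0. rewrite pow_INR. simpl INR. Ceq. replace (1 + 1) with 2 by ring. field. apply pow_nonzero; lra.
  - rewrite csum_conj. fold (mx_trace (2^N) (mask_monomial N m)). unfold mask_monomial.
    rewrite trace_mono_zero. Ceq. apply mask_indices_NoDup. apply mask_indices_in_range.
    intros E. apply n. apply (mask_indices_nil N m); auto.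
Qed.

Lemma omega_generator_expand N D U0 m u :
  omega N (mask_monomial N m) (mx_mul (2^N) (mx_scale Ci (Dhat N D u)) U0) =
  csum (fun p => csum (fun q => Cmul (RtoC (- / 4 * D u (S p) (S q)))
    (omega N (mx_mul (2^N) (majorana N (S q)) (mx_mul (2^N) (majorana N (S p)) (mask_monomial N m))) U0)) (2 * N)) (2 * N).
Proof.
  rewrite (omega_ext_V _ _ _ _ (fun i j _ _ => Dhat_expand N D u U0 i j)).
  rewrite omega_sum. apply csum_ext; intros p Hp.
  rewrite omega_lin. apply csum_ext; intros q Hq. rewrite omega_pair. auto.
Qed.

Lemma omega_pair_flip N m p q V : (p < 2 * N)%nat -> (q < 2 * N)%nat ->
  exists s, (s = C1 \/ s = Copp C1) /\
  omega N (mx_mul (2^N) (majorana N (S q)) (mx_mul (2^N) (majorana N (S p)) (mask_monomial N m))) V =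
  Cmul s (omega N (mask_monomial N (flip_pair (S p) (S q) m)) V).
Proof.
  intros Hp Hq. destruct (pair_action N (S p) (S q) m ltac:(lia) ltac:(lia)) as [s [Hs E]].
  exists s; split; auto. rewrite (omega_meq_E _ _ _ _ E). rewrite omega_scale_E.
  destruct Hs; subst; f_equal; Ceq.
Qed.

Definition sqnorm (z : C) : R := Re z * Re z + Im z * Im z.

Definition re_inner (z w : C) : R := Re z * Re w + Im z * Im w.

Lemma sqnorm_nonneg z : 0 <= sqnorm z.
Proof. unfold sqnorm. nra. Qed.

(* One term of the Schur test: [2 a Re(conj x y) / Wm^2] is dominated by
   [A Rc (|x|^2/Wm^2 + |y|^2/Wt^2)] whenever [|a| <= A] and [Wt <= Rc Wm]
   (the inequality [2|uv| <= u^2 + v^2] after rescaling x by Wm and y by Wt). *)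
Lemma schur_term a A Rc Wm Wt x1 x2 y1 y2 :
  Rabs a <= A -> 0 < Wm -> 0 < Wt -> Wt <= Rc * Wm ->
  a * (2 * (x1 * y1 + x2 * y2)) * / (Wm * Wm) <=
  A * Rc * ((x1 * x1 + x2 * x2) * / (Wm * Wm) + (y1 * y1 + y2 * y2) * / (Wt * Wt)).
Proof.
  intros Ha HWm HWt HR.
  set (X1 := x1 / Wm). set (X2 := x2 / Wm). set (Y1 := y1 / Wt). set (Y2 := y2 / Wt).
  assert (E1 : a * (2 * (x1 * y1 + x2 * y2)) * / (Wm * Wm) = a * (2 * (X1 * Y1 + X2 * Y2)) * (Wt / Wm))
    by (unfold X1, X2, Y1, Y2; field; lra).
  assert (E2 : (x1 * x1 + x2 * x2) * / (Wm * Wm) + (y1 * y1 + y2 * y2) * / (Wt * Wt)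
               = X1 * X1 + X2 * X2 + Y1 * Y1 + Y2 * Y2)
    by (unfold X1, X2, Y1, Y2; field; lra).
  rewrite E1, E2.
  set (Z := 2 * (X1 * Y1 + X2 * Y2)). set (S := X1 * X1 + X2 * X2 + Y1 * Y1 + Y2 * Y2).
  assert (HS : Rabs Z <= S).
  { pose proof (Rle_0_sqr (X1 + Y1)). pose proof (Rle_0_sqr (X2 + Y2)).
    pose proof (Rle_0_sqr (X1 - Y1)). pose proof (Rle_0_sqr (X2 - Y2)). unfold Rsqr in *.
    apply Rabs_le. unfold Z, S. split; nra. }
  assert (HQ : 0 < Wt / Wm <= Rc).
  { split; [apply Rdiv_lt_0_compat; lra |].
    apply Rmult_le_reg_r with Wm; auto. field_simplify; lra. }
  assert (aZ : a * Z <= A * S).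
  { apply Rle_trans with (Rabs a * Rabs Z); [rewrite <- Rabs_mult; apply Rle_abs |].
    apply Rmult_le_compat; auto; apply Rabs_pos. }
  assert (0 <= A * S) by (pose proof (Rabs_pos a); pose proof (Rabs_pos Z); nra).
  apply Rle_trans with (A * S * (Wt / Wm)); [apply Rmult_le_compat_r; lra |].
  replace (A * Rc * S) with (A * S * Rc) by ring. apply Rmult_le_compat_l; lra.
Qed.

Section SchurTest.
Variables (n NN : nat) (x Om : nat -> C) (T : nat -> nat -> nat -> C)
  (a A Rc : nat -> nat -> R) (W : nat -> R) (flip : nat -> nat -> nat -> nat).
Hypothesis Om_expand : forall m, (m < n)%nat ->
  Om m = csum (fun p => csum (fun q => Cmul (RtoC (a p q)) (T p q m)) NN) NN.
Hypothesis T_flip : forall p q m, (p < NN)%nat -> (q < NN)%nat -> (m < n)%nat ->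
  exists s, (s = C1 \/ s = Copp C1) /\ T p q m = Cmul s (x (flip p q m)).
Hypothesis a_bound : forall p q, (p < NN)%nat -> (q < NN)%nat -> Rabs (a p q) <= A p q.
Hypothesis W_pos : forall m, 0 < W m.
Hypothesis W_flip : forall p q m, (p < NN)%nat -> (q < NN)%nat -> (m < n)%nat ->
  W (flip p q m) <= Rc p q * W m.
Hypothesis flip_invol : forall p q m, (p < NN)%nat -> (q < NN)%nat -> (m < n)%nat ->
  (flip p q m < n)%nat /\ flip p q (flip p q m) = m.

Let g (m : nat) : R := / (W m * W m) * sqnorm (x m).

Lemma schur_row m : (m < n)%nat ->
  / (W m * W m) * (2 * re_inner (x m) (Om m)) <=
  rsum (fun p => rsum (fun q => A p q * Rc p q * (g m + g (flip p q m))) NN) NN.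
Proof.
  intros Hm. unfold re_inner. rewrite Om_expand by auto. rewrite Re_csum, Im_csum.
  rewrite (rsum_ext (fun k => Re _) (fun p => rsum (fun q => a p q * Re (T p q m)) NN))
    by (intros; rewrite Re_csum; apply rsum_ext; intros; simpl; ring).
  rewrite (rsum_ext (fun k => Im _) (fun p => rsum (fun q => a p q * Im (T p q m)) NN))
    by (intros; rewrite Im_csum; apply rsum_ext; intros; simpl; ring).
  assert (E : / (W m * W m) * (2 * (Re (x m) * rsum (fun p => rsum (fun q => a p q * Re (T p q m)) NN) NN +
       Im (x m) * rsum (fun p => rsum (fun q => a p q * Im (T p q m)) NN) NN)) =
       rsum (fun p => rsum (fun q => a p q * (2 * (Re (x m) * Re (T p q m) + Im (x m) * Im (T p q m)))
                                      * / (W m * W m)) NN) NN).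
  { rewrite (rsum_ext (fun p => rsum (fun q => a p q * _ * _) NN)
      (fun p => rsum (fun q => (/ (W m * W m) * 2 * Re (x m)) * (a p q * Re (T p q m))
                             + (/ (W m * W m) * 2 * Im (x m)) * (a p q * Im (T p q m))) NN))
      by (intros; apply rsum_ext; intros; ring).
    rewrite rsum2_lin. ring. }
  rewrite E. apply rsum_le; intros p Hp. apply rsum_le; intros q Hq.
  destruct (T_flip p q m Hp Hq Hm) as [s [Hs Es]].
  pose proof (W_pos m). pose proof (W_pos (flip p q m)).
  eapply Rle_trans.
  - apply (schur_term (a p q) (A p q) (Rc p q) (W m) (W (flip p q m))); auto.
  - unfold g, sqnorm. apply Req_le. rewrite Es. destruct Hs; subst; simpl; field; lra.
Qed.

(* Summing the rows: since each [flip p q] is an involution of [0..n-1],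
   the [g (flip p q m)] terms sum to the same total as the [g m] terms. *)
Lemma schur_sum :
  rsum (fun m => / (W m * W m) * (2 * re_inner (x m) (Om m))) n <=
  2 * rsum (fun p => rsum (fun q => A p q * Rc p q) NN) NN * rsum g n.
Proof.
  eapply Rle_trans; [apply rsum_le; intros m Hm; apply (schur_row m Hm) |].
  rewrite (rsum_ext _ (fun m => rsum (fun p => rsum (fun q =>
             A p q * Rc p q * g m + A p q * Rc p q * g (flip p q m)) NN) NN))
    by (intros; apply rsum_ext; intros; apply rsum_ext; intros; ring).
  rewrite (rsum_swap _ n NN). apply Req_le.
  transitivity (rsum (fun p => rsum (fun q => (2 * rsum g n) * (A p q * Rc p q)) NN) NN).
  - apply rsum_ext; intros p Hp. rewrite (rsum_swap _ n NN). apply rsum_ext; intros q Hq.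
    rewrite rsum_add, !rsum_scal.
    rewrite (rsum_reindex g n (flip p q)) by (intros; apply flip_invol; auto). ring.
  - rewrite (rsum_ext _ (fun p => (2 * rsum g n) * rsum (fun q => A p q * Rc p q) NN))
      by (intros; apply rsum_scal).
    rewrite rsum_scal. ring.
Qed.

End SchurTest.

(* The integrating factor: if [G' <= 2K G] on (0,1), then [G(t) exp(-2Kt)]
   is non-increasing there (mean value theorem). *)
Lemma integrating_factor_nonincreasing (G dG : R -> R) (K : R) :
  (forall u, 0 < u < 1 -> derivable_pt_lim G u (dG u) /\ dG u <= 2 * K * G u) ->
  forall a b, 0 < a -> a < b -> b < 1 ->
  G b * exp (- (2 * K) * b) <= G a * exp (- (2 * K) * a).
Proof.
  intros HD a b Ha Hab Hb.
  set (H := fun t => G t * exp (- (2 * K) * t)).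
  set (dH := fun u => (dG u - 2 * K * G u) * exp (- (2 * K) * u)).
  assert (HdH : forall u, 0 < u < 1 -> derivable_pt_lim H u (dH u)).
  { intros u Hu. destruct (HD u Hu) as [DG _].
    assert (Dexp : derivable_pt_lim (fun t => exp (- (2 * K) * t)) u
                     (exp (- (2 * K) * u) * (- (2 * K)))).
    { apply (derivable_pt_lim_comp (fun t => - (2 * K) * t) exp u (- (2 * K))).
      - pose proof (derivable_pt_lim_scal id (- (2 * K)) u 1 (derivable_pt_lim_id u)) as D0.
        unfold mult_real_fct, id in D0. rewrite Rmult_1_r in D0. exact D0.
      - apply derivable_pt_lim_exp. }
    unfold dH.
    replace ((dG u - 2 * K * G u) * exp (- (2 * K) * u)) with
      (dG u * exp (- (2 * K) * u) + G u * (exp (- (2 * K) * u) * - (2 * K))) by ring.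
    exact (derivable_pt_lim_mult _ _ _ _ _ DG Dexp). }
  assert (prH : forall c, a < c < b -> derivable_pt H c)
    by (intros c Hc; exists (dH c); apply HdH; lra).
  assert (prid : forall c, a < c < b -> derivable_pt id c)
    by (intros c Hc; exists 1; apply derivable_pt_lim_id).
  destruct (MVT H id a b prH prid Hab) as [c [Hc E]].
  - intros c Hc. apply derivable_continuous_pt. exists (dH c). apply HdH; lra.
  - intros c Hc. apply derivable_continuous_pt. exists 1. apply derivable_pt_lim_id.
  - rewrite (derive_pt_eq_0 H c _ (prH c Hc) (HdH c ltac:(lra))) in E.
    rewrite (derive_pt_eq_0 id c _ (prid c Hc) (derivable_pt_lim_id c)) in E.
    unfold id, dH in E. destruct (HD c ltac:(lra)) as [_ Hle].
    assert (0 < exp (- (2 * K) * c)) by apply exp_pos.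
    assert ((dG c - 2 * K * G c) * exp (- (2 * K) * c) <= 0) by (assert (dG c - 2 * K * G c <= 0) by lra; nra).
    unfold H in E. nra.
Qed.

Lemma gronwall_interior (G dG : R -> R) (K : R) : 0 <= K ->
  (forall t, 0 <= t <= 1 -> 0 <= G t) ->
  (forall u, 0 < u < 1 -> derivable_pt_lim G u (dG u) /\ dG u <= 2 * K * G u) ->
  forall a b, 0 < a -> a < b -> b < 1 -> G b <= exp (2 * K) * G a.
Proof.
  intros HK Hpos HD a b Ha Hab Hb.
  pose proof (integrating_factor_nonincreasing G dG K HD a b Ha Hab Hb) as M.
  assert (Eb : G b = G b * exp (- (2 * K) * b) * exp (2 * K * b)).
  { rewrite Rmult_assoc, <- exp_plus. replace (- (2 * K) * b + 2 * K * b) with 0 by ring.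
    rewrite exp_0; ring. }
  rewrite Eb.
  apply Rle_trans with (G a * exp (- (2 * K) * a) * exp (2 * K * b)).
  { apply Rmult_le_compat_r; [left; apply exp_pos | auto]. }
  rewrite Rmult_assoc, <- exp_plus, Rmult_comm.
  apply Rmult_le_compat_r; [apply Hpos; lra |].
  destruct (Req_dec (- (2 * K) * a + 2 * K * b) (2 * K)) as [Eq | Ne].
  - rewrite Eq; lra.
  - left. apply exp_increasing. nra.
Qed.

Lemma gronwall (G dG : R -> R) (K : R) : 0 <= K ->
  (forall t, 0 <= t <= 1 -> 0 <= G t) ->
  (forall u, 0 < u < 1 -> derivable_pt_lim G u (dG u) /\ dG u <= 2 * K * G u) ->
  limit1_in G (fun t => 0 <= t <= 1) (G 0) 0 ->
  limit1_in G (fun t => 0 <= t <= 1) (G 1) 1 ->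
  G 1 <= exp (2 * K) * G 0.
Proof.
  intros HK Hpos HD L0 L1.
  destruct (Rle_or_lt (G 1) (exp (2 * K) * G 0)) as [Ok | Bad]; auto. exfalso.
  set (del := G 1 - exp (2 * K) * G 0).
  assert (Hd : del > 0) by (unfold del; lra).
  assert (Ee : exp (2 * K) > 0) by apply exp_pos.
  destruct (L0 (del / (3 * exp (2 * K)))) as [a0 [Ha0 Near0]].
  { apply Rdiv_lt_0_compat; lra. }
  destruct (L1 (del / 3)) as [a1 [Ha1 Near1]]; [lra |].
  set (a := Rmin (a0 / 2) (1 / 4)). set (b := Rmax (1 - a1 / 2) (3 / 4)).
  assert (Ha : 0 < a /\ a < a0 /\ a <= 1 / 4).
  { unfold a. split; [apply Rmin_glb_lt; lra |]. split; [| apply Rmin_r].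
    apply Rle_lt_trans with (a0 / 2); [apply Rmin_l | lra]. }
  assert (Hb : 1 - a1 < b /\ b < 1 /\ 3 / 4 <= b).
  { unfold b. split; [apply Rlt_le_trans with (1 - a1 / 2); [lra | apply Rmax_l] |].
    split; [apply Rmax_lub_lt; lra | apply Rmax_r]. }
  assert (Da : R_dist (G a) (G 0) < del / (3 * exp (2 * K))).
  { apply Near0. split; [lra |]. simpl. unfold R_dist. rewrite Rminus_0_r, Rabs_right; lra. }
  assert (Db : R_dist (G b) (G 1) < del / 3).
  { apply Near1. split; [lra |]. simpl. unfold R_dist. rewrite Rabs_left; lra. }
  unfold R_dist in Da, Db. apply Rabs_def2 in Da. apply Rabs_def2 in Db.
  pose proof (gronwall_interior G dG K HK Hpos HD a b ltac:(lra) ltac:(lra) ltac:(lra)) as Gab.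
  assert (Escale : exp (2 * K) * (del / (3 * exp (2 * K))) = del / 3) by (field; lra).
  assert (exp (2 * K) * G a < exp (2 * K) * G 0 + del / 3).
  { rewrite <- Escale, <- Rmult_plus_distr_l. apply Rmult_lt_compat_l; lra. }
  unfold del in *. lra.
Qed.

Lemma pair_span_bound p q : (2 * pair_span (S p) (S q) <= natdist p q + 3)%nat.
Proof.
  unfold pair_span, maj_qubit, natdist.
  replace (S p - 1)%nat with p by lia. replace (S q - 1)%nat with q by lia.
  pose proof (Nat.div_mod p 2 ltac:(lia)). pose proof (Nat.mod_upper_bound p 2 ltac:(lia)).
  pose proof (Nat.div_mod q 2 ltac:(lia)). pose proof (Nat.mod_upper_bound q 2 ltac:(lia)).
  lia.
Qed.

Definition coupling_bound c eps r p q := c * eps * r ^ 2 * lam r ^ natdist (S p) (S q) / 4.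

Definition schur_constant N c eps r :=
  rsum (fun p => rsum (fun q => coupling_bound c eps r p q * weight_ratio eps r p q) (2 * N)) (2 * N).

(* Each pair contributes [O(sqrt eps * mu^|p-q|)]: the factor [eps] of the
   coupling pays for [sqrt eps] of fermionic weight, and [lam^|p-q|] pays
   for [lam^span ~ mu^|p-q|] of qubit weight. *)
Lemma term_bound c eps r p q : 0 < c -> 0 < eps -> 1 <= r ->
  coupling_bound c eps r p q * weight_ratio eps r p q <=
  c * sqrt eps * r ^ 2 / (4 * sqrt (lam r) ^ 3) * sqrt (lam r) ^ natdist p q.
Proof.
  intros Hc He Hr. destruct (sqrt_lam_bounds r Hr) as [[Hmu8 Hmu1] HL].
  unfold coupling_bound, weight_ratio.
  set (mu := sqrt (lam r)) in *. rewrite HL.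
  assert (Hse : 0 < sqrt eps) by (apply sqrt_lt_R0; lra).
  assert (Hes : eps = sqrt eps * sqrt eps) by (rewrite sqrt_sqrt; lra).
  replace (natdist (S p) (S q)) with (natdist p q) by (unfold natdist; lia).
  set (d := natdist p q). set (sp := pair_span (S p) (S q)).
  assert (Hsp : mu ^ d * mu ^ 3 <= (mu * mu) ^ sp).
  { rewrite <- pow_add, Rpow_mult_distr, <- pow_add. apply pow_le_exp; [lra |].
    pose proof (pair_span_bound p q). fold d sp in H. lia. }
  assert (0 < mu ^ d) by (apply pow_lt; lra).
  assert (0 < mu ^ 3) by (apply pow_lt; lra).
  assert (0 < (mu * mu) ^ sp) by (apply pow_lt; nra).
  assert (0 < r ^ 2) by (apply pow_lt; lra).
  rewrite Hes at 1. rewrite (Rpow_mult_distr mu mu d).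
  apply Rle_trans with (c * sqrt eps * r ^ 2 / 4 * (mu ^ d * mu ^ d / (mu * mu) ^ sp)).
  { right. field. split; lra. }
  apply Rle_trans with (c * sqrt eps * r ^ 2 / 4 * (mu ^ d / mu ^ 3)).
  2:{ right. field. lra. }
  apply Rmult_le_compat_l; [apply Rmult_le_pos; [| lra]; repeat apply Rmult_le_pos; lra |].
  apply Rmult_le_reg_r with ((mu * mu) ^ sp * mu ^ 3); [nra |].
  field_simplify; [| lra | lra]. nra.
Qed.

(* Arithmetic of the final constant: for [mu >= 4/5] one has [1 + mu <= 6 mu^3]. *)
Lemma schur_constant_numeric c eps r mu N : 0 < c -> 0 < eps -> 4 / 5 <= mu < 1 ->
  c * sqrt eps * r ^ 2 / (4 * mu ^ 3) * ((1 + mu) / (1 - mu)) * INR (2 * N)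
  <= 3 * sqrt eps * c * r ^ 2 / (1 - mu) * INR N.
Proof.
  intros Hc He Hmu.
  assert (Hse : 0 < sqrt eps) by (apply sqrt_lt_R0; lra).
  assert (0 <= INR N) by apply pos_INR.
  generalize (pow2_ge_0 r). generalize (r ^ 2). intros r2 Hr2.
  assert (Hm2 : 16 / 25 <= mu * mu) by nra.
  assert (0 <= (mu * mu - 16 / 25) * mu) by (apply Rmult_le_pos; lra).
  assert (Hm3 : 1 + mu <= 6 * mu ^ 3) by (replace (mu ^ 3) with (mu * mu * mu) by ring; lra).
  assert (0 < mu ^ 3) by (apply pow_lt; lra).
  rewrite mult_INR. simpl INR.
  set (P := c * sqrt eps * r2 * INR N / (1 - mu)).
  assert (0 <= P) by (unfold P; apply Rmult_le_pos; [repeat apply Rmult_le_pos; lra |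
                                                   left; apply Rinv_0_lt_compat; lra]).
  replace (c * sqrt eps * r2 / (4 * mu ^ 3) * ((1 + mu) / (1 - mu)) * ((1 + 1) * INR N))
    with (P * ((1 + mu) / (2 * mu ^ 3))) by (unfold P; field; split; lra).
  replace (3 * sqrt eps * c * r2 / (1 - mu) * INR N) with (P * 3) by (unfold P; field; lra).
  apply Rmult_le_compat_l; auto.
  apply Rmult_le_reg_r with (2 * mu ^ 3); [lra |].
  field_simplify; lra.
Qed.

Lemma schur_constant_le N c eps r : 0 < c -> 0 < eps -> 1 <= r ->
  schur_constant N c eps r <= yexp eps c r * INR N.
Proof.
  intros Hc He Hr. destruct (sqrt_lam_bounds r Hr) as [[Hmu8 Hmu1] _].
  set (mu := sqrt (lam r)) in *.
  set (Cst := c * sqrt eps * r ^ 2 / (4 * mu ^ 3)).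
  assert (HC : 0 <= Cst).
  { assert (0 < mu ^ 3) by (apply pow_lt; lra). assert (0 < sqrt eps) by (apply sqrt_lt_R0; lra).
    unfold Cst. apply Rmult_le_pos; [repeat apply Rmult_le_pos; try lra; apply pow2_ge_0 |].
    left; apply Rinv_0_lt_compat; lra. }
  assert (Row : forall p, rsum (fun q => coupling_bound c eps r p q * weight_ratio eps r p q) (2 * N)
                          <= Cst * ((1 + mu) / (1 - mu))).
  { intros p. apply Rle_trans with (rsum (fun q => Cst * mu ^ natdist p q) (2 * N)).
    - apply rsum_le. intros q _. apply term_bound; auto.
    - rewrite rsum_scal. apply Rmult_le_compat_l; auto.
      eapply Rle_trans; [apply dist_sum; lra |].
      apply Rmult_le_compat_r; [left; apply Rinv_0_lt_compat; lra |].
      pose proof (pow_le mu (S p) ltac:(lra)). lra. }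
  unfold schur_constant. eapply Rle_trans; [apply rsum_le; intros p _; apply Row |].
  rewrite rsum_const. unfold yexp. fold mu. unfold Cst.
  apply schur_constant_numeric; lra.
Qed.

Lemma has_cderiv_sqnorm F u F' : has_cderiv F u F' ->
  derivable_pt_lim (fun t => sqnorm (F t)) u (2 * re_inner (F u) F').
Proof.
  intros [A B]. unfold sqnorm, re_inner.
  replace (2 * _) with (Re F' * Re (F u) + Re (F u) * Re F' + (Im F' * Im (F u) + Im (F u) * Im F'))
    by ring.
  exact (derivable_pt_lim_plus _ _ _ _ _ (derivable_pt_lim_mult _ _ _ _ _ A A)
           (derivable_pt_lim_mult _ _ _ _ _ B B)).
Qed.

Lemma has_climit_sqnorm F t0 : has_climit F t0 ->
  limit1_in (fun t => sqnorm (F t)) (fun t => 0 <= t <= 1) (sqnorm (F t0)) t0.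
Proof.
  intros [A B]. unfold sqnorm.
  exact (limit_plus _ _ _ _ _ _ (limit_mul _ _ _ _ _ _ A A) (limit_mul _ _ _ _ _ _ B B)).
Qed.

Section WeightedNorm.
Variables (N : nat) (r eps c : R) (D : R -> nat -> nat -> R) (U : R -> Mx).
Hypothesis r_ge1 : 1 <= r.
Hypothesis eps_range : 0 < eps < 1 / 4.
Hypothesis c_pos : 0 < c.
Hypothesis D_decay : forall u p q, 0 <= u <= 1 -> (1 <= p <= 2 * N)%nat -> (1 <= q <= 2 * N)%nat ->
  Rabs (D u p q) <= c * eps * r ^ 2 * lam r ^ natdist p q.
Hypothesis U_Texp : is_Texp N D U.

Let W (m : nat) : R := weight N eps r m.
Let coeff (m : nat) (t : R) : C := omega N (mask_monomial N m) (U t).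
Let dcoeff (m : nat) (u : R) : C :=
  omega N (mask_monomial N m) (mx_mul (2 ^ N) (mx_scale Ci (Dhat N D u)) (U u)).
Let K : R := schur_constant N c eps r.

Let G (t : R) : R := rsum (fun m => / (W m * W m) * sqnorm (coeff m t)) (2 ^ (2 * N)).

Let dG (u : R) : R :=
  rsum (fun m => / (W m * W m) * (2 * re_inner (coeff m u) (dcoeff m u))) (2 ^ (2 * N)).

Lemma W_pos m : 0 < W m.
Proof. apply weight_pos; lra. Qed.

Lemma inv_W2_pos m : 0 < / (W m * W m).
Proof. pose proof (W_pos m). apply Rinv_0_lt_compat. nra. Qed.

(* Initially only the identity monomial (mask 0, weight 1) is present. *)
Lemma G_at_0 : G 0 = 1.
Proof.
  destruct U_Texp as [U0 _].
  assert (Hn : (0 < 2 ^ (2 * N))%nat) by (apply Nat.neq_0_lt_0, Nat.pow_nonzero; lia).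
  unfold G. rewrite (rsum_single _ _ 0%nat Hn).
  - unfold coeff. rewrite (omega_initial N (U 0) 0 U0 Hn). unfold W, weight.
    rewrite mask_weight_0, support_bound_0. unfold sqnorm; simpl.
    replace (0 / 4) with 0 by field. rewrite Rpower_O by lra. field.
  - intros m Hm Hm0. unfold coeff. rewrite (omega_initial N (U 0) m U0 Hm).
    destruct (Nat.eqb_spec m 0); [lia |]. unfold sqnorm; simpl. ring.
Qed.

Lemma G_deriv u : 0 < u < 1 -> derivable_pt_lim G u (dG u).
Proof.
  intros Hu. destruct U_Texp as [_ [Hder _]]. unfold G, dG.
  apply (rsum_deriv (fun m t => / (W m * W m) * sqnorm (coeff m t))
           (fun m u => / (W m * W m) * (2 * re_inner (coeff m u) (dcoeff m u)))).
  intros m Hm. apply (derivable_pt_lim_scal (fun t => sqnorm (coeff m t))).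
  apply has_cderiv_sqnorm, has_cderiv_omega.
  intros i j Hi Hj. destruct (Hder u Hu i j Hi Hj); split; auto.
Qed.

(* The key estimate [G' <= 2 K G]: the weighted Schur test applied to the
   expansion of [i Dhat] into Majorana pairs. *)
Lemma G_deriv_bound u : 0 < u < 1 -> dG u <= 2 * K * G u.
Proof.
  intros Hu. unfold dG.
  apply (schur_sum (2 ^ (2 * N)) (2 * N) (fun m => coeff m u) (fun m => dcoeff m u)
    (fun p q m => omega N (mx_mul (2 ^ N) (majorana N (S q))
                    (mx_mul (2 ^ N) (majorana N (S p)) (mask_monomial N m))) (U u))
    (fun p q => - / 4 * D u (S p) (S q)) (coupling_bound c eps r) (weight_ratio eps r) W
    (fun p q m => flip_pair (S p) (S q) m)).
  - intros m Hm. apply omega_generator_expand.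
  - intros p q m Hp Hq Hm. apply omega_pair_flip; auto.
  - intros p q Hp Hq. unfold coupling_bound.
    rewrite Rabs_mult, Rabs_Ropp, Rabs_right by lra.
    pose proof (D_decay u (S p) (S q) ltac:(lra) ltac:(lia) ltac:(lia)). lra.
  - apply W_pos.
  - intros p q m Hp Hq Hm. apply weight_flip_pair; auto; lra.
  - intros p q m Hp Hq Hm. split; [apply flip_pair_lt; auto; lia | apply flip_pair_invol].
Qed.

Lemma G_limit t0 : t0 = 0 \/ t0 = 1 -> limit1_in G (fun t => 0 <= t <= 1) (G t0) t0.
Proof.
  intros Ht0. destruct U_Texp as [_ [_ Hlim]].
  apply rsum_limit. intros m Hm.
  apply (limit_mul _ _ _ _ _ _ (limit_const (/ (W m * W m)) _ t0)).
  apply (has_climit_sqnorm (fun t => coeff m t)), has_climit_omega.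
  intros i j Hi Hj. destruct (Hlim i j Hi Hj t0 Ht0); split; auto.
Qed.

Lemma K_nonneg : 0 <= K.
Proof.
  unfold K, schur_constant. apply rsum_nonneg; intros p _; apply rsum_nonneg; intros q _.
  unfold coupling_bound, weight_ratio. destruct (lam_bounds r r_ge1).
  assert (0 < sqrt eps) by (apply sqrt_lt_R0; lra).
  assert (0 < lam r ^ pair_span (S p) (S q)) by (apply pow_lt; lra).
  assert (0 < lam r ^ natdist (S p) (S q)) by (apply pow_lt; lra).
  assert (0 < r ^ 2) by (apply pow_lt; lra).
  apply Rmult_le_pos; [| left; apply Rinv_0_lt_compat; nra].
  unfold Rdiv. repeat apply Rmult_le_pos; lra.
Qed.

Lemma G_at_1 : G 1 <= exp (2 * K).
Proof.
  assert (HG : G 1 <= exp (2 * K) * G 0).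
  { apply (gronwall G dG K K_nonneg).
    - intros t _. apply rsum_nonneg; intros m _.
      pose proof (inv_W2_pos m). pose proof (sqnorm_nonneg (coeff m t)). nra.
    - intros u Hu. split; [apply G_deriv | apply G_deriv_bound]; auto.
    - apply G_limit; auto.
    - apply G_limit; auto. }
  rewrite G_at_0, Rmult_1_r in HG. exact HG.
Qed.

Lemma coeff_bound m : (m < 2 ^ (2 * N))%nat -> Cnorm (coeff m 1) <= W m * exp K.
Proof.
  intros Hm. pose proof (W_pos m) as Hw. pose proof (exp_pos K).
  assert (Hterm : / (W m * W m) * sqnorm (coeff m 1) <= exp (2 * K)).
  { eapply Rle_trans; [| apply G_at_1].
    apply (rsum_ge_term (fun m => / (W m * W m) * sqnorm (coeff m 1))); auto.
    intros k _. pose proof (inv_W2_pos k). pose proof (sqnorm_nonneg (coeff k 1)). nra. }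
  assert (Hsq : sqnorm (coeff m 1) <= (W m * exp K) * (W m * exp K)).
  { replace ((W m * exp K) * (W m * exp K)) with ((W m * W m) * exp (2 * K))
      by (replace (2 * K) with (K + K) by ring; rewrite exp_plus; ring).
    apply Rmult_le_reg_l with (/ (W m * W m)); [apply inv_W2_pos |].
    rewrite <- Rmult_assoc, Rinv_l, Rmult_1_l by nra. exact Hterm. }
  unfold Cnorm. rewrite <- (sqrt_square (W m * exp K)) by nra.
  apply sqrt_le_1_alt. exact Hsq.
Qed.

End WeightedNorm.

Theorem mainTheorem9 (N : nat) (r eps c : R) (D : R -> nat -> nat -> R)
  (U : R -> Mx) (ps : list nat) :
  1 <= r -> 0 < eps < 1 / 4 -> 0 < c ->
  (forall u p q, 0 <= u <= 1 -> (1 <= p <= 2 * N)%nat -> (1 <= q <= 2 * N)%nat ->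
     D u p q = - D u q p) ->
  (forall u p q, 0 <= u <= 1 -> (1 <= p <= 2 * N)%nat -> (1 <= q <= 2 * N)%nat ->
     Rabs (D u p q) <= c * eps * r ^ 2 * lam r ^ natdist p q) ->
  is_Texp N D U ->
  monomial_index N ps ->
  Cnorm (omega N (monomial N ps) (U 1)) <=
    Rpower eps (INR (fermionic_weight ps) / 4)
    * lam r ^ qubit_weight N (monomial N ps)
    * exp (yexp eps c r * INR N).
Proof.
  intros Hr Heps Hc _ Hbd HT Hidx.
  destruct (lam_bounds r Hr) as [L1 L2].
  destruct (monomial_index_mask N ps Hidx) as [m [Hm Hps]].
  assert (Hmono : monomial N ps = mask_monomial N m) by (unfold mask_monomial; rewrite Hps; auto).
  assert (Hfw : fermionic_weight ps = mask_weight N m)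
    by (unfold mask_weight, fermionic_weight; rewrite Hps; auto).
  rewrite Hmono, Hfw.
  (* [|omega_m(1)| <= W_m e^K], with [K <= y N] and [qubit_weight <= support_bound]. *)
  eapply Rle_trans; [apply (coeff_bound N r eps c D U); auto |].
  unfold weight.
  assert (0 < Rpower eps (INR (mask_weight N m) / 4)) by apply exp_pos.
  assert (0 < lam r ^ support_bound N (mask_monomial N m)) by (apply pow_lt; lra).
  apply Rmult_le_compat; [left; apply Rmult_lt_0_compat; auto | left; apply exp_pos | |].
  - apply Rmult_le_compat_l; [lra |].
    apply pow_le_exp; [lra | apply qubit_weight_le_support].
  - pose proof (schur_constant_le N c eps r Hc ltac:(lra) Hr) as HK.
    destruct (Req_dec (schur_constant N c eps r) (yexp eps c r * INR N)) as [-> | Hne]; [lra |].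
    left. apply exp_increasing. lra.
Qed.
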